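(* Let $a\in(0,1)$. As $n\to\infty$, $\mu\to0$ with $n\mu\to\theta\in[0,\infty)$ and $|\mathcal{S}|\mu\to\eta\in[0,\infty)$, $$\mathbb{E}\Big[\sum_{i\in\mathcal{S}}\delta_{n^{-1}B_i^{n,\mu}}\big((a,1)\big)\Big]\longrightarrow 2\eta(a^{-1}-1).$$
   Context: Basic model. Let $\mathcal{N}=\{A,C,G,T\}$, $\mathcal{S}$ a finite nonempty set of sites. One initial cell with genome $u=(u_i)_{i\in\mathcal{S}}\in\mathcal{N}^{\mathcal{S}}$; each cell lives an independent Exp(1) time and is then replaced by two daughters. At a division of a cell with genome $v$, conditionally on $v$ the daughters' entries $V_i^{(r)}$ ($i\in\mathcal{S}$, $r\in\{1,2\}$) are independent with $\mathbb{P}[V_i^{(r)}=\psi\mid v]=\mu/3$ for $\psi\neq v_i$ and $1-\mu$ for $\psi=v_i$; different divisions mutate independently. $\sigma_n$ = first time there are $n$ alive cells; $B_i^{n,\mu}$ = number of cells alive at $\sigma_n$ whose nucleotide at site $i$ differs from $u_i$. The limit is along arbitrary sequences of $(n,\mu,\mathcal{S})$ with the stated asymptotics. *)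

From Stdlib Require Import Reals List.
Import ListNotations.
Open Scope R_scope.

Inductive Nuc : Type := NA | NC | NG | NT.

Definition nuc_eqb (x y : Nuc) : bool :=
  match x, y with
  | NA, NA | NC, NC | NG, NG | NT, NT => true
  | _, _ => false
  end.

Definition all_nucs : list Nuc := [NA; NC; NG; NT].

(* A genome on the site set S = {0, ..., m-1} is a list of length m;
   entry i is the nucleotide at site i. *)
Fixpoint all_genomes (m : nat) : list (list Nuc) :=
  match m with
  | O => [nil]
  | S m' => flat_map (fun x => map (fun g => x :: g) (all_genomes m')) all_nucs
  end.

Definition rsum {A : Type} (l : list A) (g : A -> R) : R :=
  fold_right (fun x acc => g x + acc) 0 l.

Definition site_prob (mu : R) (x y : Nuc) : R :=
  if nuc_eqb x y then 1 - mu else mu / 3.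

(* Probability that a daughter of a cell with genome v has genome w
   (entries independent across sites). *)
Fixpoint genome_prob (mu : R) (v w : list Nuc) : R :=
  match v, w with
  | x :: v', y :: w' => site_prob mu x y * genome_prob mu v' w'
  | _, _ => 1
  end.

Definition divide_at (cells : list (list Nuc)) (j : nat) (w1 w2 : list Nuc)
  : list (list Nuc) :=
  firstn j cells ++ w1 :: w2 :: skipn (S j) cells.

(* Expectation of f(population) after r further divisions, for the
   population process observed at its division times (the jump chain of the
   Yule process with Exp(1) lifetimes): at each division the dividing cell is
   uniform among the alive cells, and the two daughters mutate independently. *)
Fixpoint expect_after (r : nat) (mu : R) (m : nat)
         (f : list (list Nuc) -> R) (cells : list (list Nuc)) : R :=
  match r with
  | O => f cells
  | S r' =>
      / INR (length cells) *
      rsum (seq 0 (length cells)) (fun j =>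
        let v := nth j cells nil in
        rsum (all_genomes m) (fun w1 =>
          rsum (all_genomes m) (fun w2 =>
            genome_prob mu v w1 * genome_prob mu v w2 *
            expect_after r' mu m f (divide_at cells j w1 w2))))
  end.

Definition B_count (u : list Nuc) (i : nat) (cells : list (list Nuc)) : nat :=
  length (filter (fun c => negb (nuc_eqb (nth i c NA) (nth i u NA))) cells).

Definition dirac_open (a x : R) : R :=
  if Rlt_dec a x then (if Rlt_dec x 1 then 1 else 0) else 0.

Definition stat (a : R) (n m : nat) (u : list Nuc) (cells : list (list Nuc)) : R :=
  rsum (seq 0 m) (fun i => dirac_open a (INR (B_count u i cells) / INR n)).

(* E[ sum_{i in S} delta_{n^{-1} B_i^{n,mu}}((a,1)) ]: at sigma_n exactly
   n-1 divisions have occurred, starting from one cell with genome u. *)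
Definition expected_stat (a : R) (n : nat) (mu : R) (m : nat) (u : list Nuc) : R :=
  expect_after (n - 1) mu m (stat a n m u) [u].

(* By linearity over the sites, the expectation is [|S|] times the probability [p] that the
   mutant count [B] of a single site, followed along the jump chain of the Yule process, ends
   with [B / n] in [(a, 1)]; [p] is computed by a backward recursion over the population size.
   Started from no mutant, the count leaves 0 only by a first mutation, which occurs with
   probability about [2 mu] at each size [l], after which [B] behaves like Pólya's urn started
   from one mutant among [l] cells: the probability that its final fraction exceeds [a] tends to
   [(1 - a) ^ (l - 1)], and these sum to [1 / a - 1].  For small [l] this is transferred from
   [mu = 0] to [mu > 0] by a Lipschitz smoothing of the window; large [l] and the error terms
   are controlled by a second-moment supersolution.  For every [eps > 0] and large [n] this gives
   [|p - 2 (1 / a - 1) mu| <= mu (eps + C_eps K)] with [K = mu + mu H_n ^ 2 + n mu ^ 2 H_n ^ 2],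
   and [K] tends to 0 when [mu] does and [n mu] stays bounded. *)

From Stdlib Require Import Reals Lra Lia List ZArith.
Import ListNotations.
Open Scope R_scope.

Lemma rsum_cons {A} (x : A) l g : rsum (x :: l) g = g x + rsum l g.
Proof. reflexivity. Qed.

Lemma rsum_app {A} (l1 l2 : list A) g : rsum (l1 ++ l2) g = rsum l1 g + rsum l2 g.
Proof. induction l1 as [|x l1 IH]; [unfold rsum; simpl; lra|].
  rewrite <- app_comm_cons, !rsum_cons, IH; lra. Qed.

Lemma rsum_ext_in {A} (l : list A) f g :
  (forall x, In x l -> f x = g x) -> rsum l f = rsum l g.
Proof.
  induction l as [|x l IH]; intros H; [reflexivity|].
  rewrite !rsum_cons, H by (left; reflexivity).
  rewrite IH; [reflexivity|]. intros; apply H; right; assumption.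
Qed.

Lemma rsum_plus {A} (l : list A) f g : rsum l (fun x => f x + g x) = rsum l f + rsum l g.
Proof. induction l as [|x l IH]; [unfold rsum; simpl; lra|]. rewrite !rsum_cons, IH; lra. Qed.

Lemma rsum_scal {A} (l : list A) c f : rsum l (fun x => c * f x) = c * rsum l f.
Proof. induction l as [|x l IH]; [unfold rsum; simpl; lra|]. rewrite !rsum_cons, IH; lra. Qed.

Lemma rsum_scal_r {A} (l : list A) c f : rsum l (fun x => f x * c) = rsum l f * c.
Proof. rewrite Rmult_comm, <- rsum_scal. apply rsum_ext_in; intros; lra. Qed.

Lemma rsum_swap {A B} (l1 : list A) (l2 : list B) f :
  rsum l1 (fun x => rsum l2 (f x)) = rsum l2 (fun y => rsum l1 (fun x => f x y)).
Proof.
  induction l1 as [|x l1 IH].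
  - induction l2 as [|y l2 IH2]; [reflexivity|]. rewrite rsum_cons, <- IH2. unfold rsum; simpl; lra.
  - rewrite rsum_cons, IH, <- rsum_plus. reflexivity.
Qed.

Lemma rsum_le {A} (l : list A) f g :
  (forall x, In x l -> f x <= g x) -> rsum l f <= rsum l g.
Proof.
  induction l as [|x l IH]; intros H; [unfold rsum; simpl; lra|]. rewrite !rsum_cons.
  apply Rplus_le_compat; [apply H; left; auto | apply IH; intros; apply H; right; auto].
Qed.

Lemma rsum_map {A B} (h : A -> B) l g : rsum (map h l) g = rsum l (fun x => g (h x)).
Proof. induction l as [|x l IH]; [reflexivity|]. simpl map. rewrite !rsum_cons, IH; reflexivity. Qed.

Lemma rsum_flat_map {A B} (F : A -> list B) l g :
  rsum (flat_map F l) g = rsum l (fun x => rsum (F x) g).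
Proof. induction l as [|x l IH]; [reflexivity|]. simpl flat_map. rewrite rsum_app, rsum_cons, IH; reflexivity. Qed.

Lemma rsum_const {A} (l : list A) c : rsum l (fun _ => c) = INR (length l) * c.
Proof.
  induction l as [|x l IH]; simpl length; [simpl; lra|].
  rewrite rsum_cons, IH, S_INR; lra.
Qed.

Lemma rsum_abs {A} (l : list A) f : Rabs (rsum l f) <= rsum l (fun x => Rabs (f x)).
Proof.
  induction l as [|x l IH]; [unfold rsum; simpl; rewrite Rabs_R0; lra|].
  rewrite !rsum_cons. eapply Rle_trans; [apply Rabs_triang|]. lra.
Qed.

Lemma rsum_nonneg {A} (l : list A) f : (forall x, In x l -> 0 <= f x) -> 0 <= rsum l f.
Proof.
  intros H. replace 0 with (rsum l (fun _ => 0)) by (rewrite rsum_const; lra).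
  apply rsum_le; auto.
Qed.

Lemma rsum_seq_nth {A} (l : list A) d (F : A -> R) :
  rsum (seq 0 (length l)) (fun j => F (nth j l d)) = rsum l F.
Proof.
  induction l as [|x l IH]; [reflexivity|].
  simpl length. rewrite <- cons_seq, rsum_cons, <- seq_shift, rsum_map.
  simpl. rewrite IH. reflexivity.
Qed.

Lemma rsum_close {A} (l : list A) f g e : (forall x, In x l -> Rabs (f x - g x) <= e) ->
  Rabs (rsum l f - rsum l g) <= INR (length l) * e.
Proof.
  intros H. replace (rsum l f - rsum l g) with (rsum l (fun x => 1 * f x + (-1) * g x))
    by (rewrite rsum_plus, !rsum_scal; ring).
  eapply Rle_trans; [apply rsum_abs|]. rewrite <- rsum_const. apply rsum_le.
  intros x Hx. replace (1 * f x + -1 * g x) with (f x - g x) by ring. auto.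
Qed.

Lemma rsum_geometric r J : (1 <= J)%nat -> r <> 1 ->
  rsum (seq 2 (J - 1)) (fun l => r ^ (l - 1)) = (r - r ^ J) / (1 - r).
Proof.
  intros HJ Hr. induction J as [|J IH]; [lia|].
  destruct (Nat.eq_dec J 0) as [->|]; [unfold rsum; simpl; field; lra|].
  replace (S J - 1)%nat with (S (J - 1)) by lia. rewrite seq_S, rsum_app, IH by lia.
  rewrite rsum_cons. replace (2 + (J - 1) - 1)%nat with J by lia.
  unfold rsum; simpl. field. lra.
Qed.

Lemma rsum_inv_consecutive s len : (1 <= s)%nat ->
  rsum (seq s len) (fun l => / (INR l * (INR l + 1))) = / INR s - / INR (s + len).
Proof.
  revert s; induction len as [|len IH]; intros s Hs; [rewrite Nat.add_0_r; unfold rsum; simpl; lra|].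
  rewrite <- cons_seq, rsum_cons, IH by lia.
  replace (S s + len)%nat with (s + S len)%nat by lia. rewrite (S_INR s).
  assert (0 < INR s) by (apply lt_0_INR; lia).
  assert (0 < INR (s + S len)) by (apply lt_0_INR; lia). field. lra.
Qed.

Lemma Rdiv_nonneg x y : 0 <= x -> 0 < y -> 0 <= x / y.
Proof. intros. unfold Rdiv. apply Rmult_le_pos; [assumption | left; apply Rinv_0_lt_compat; assumption]. Qed.

Lemma Rdiv_nonpos y d : y <= 0 -> 0 < d -> y / d <= 0.
Proof. intros. unfold Rdiv. assert (0 < / d) by (apply Rinv_0_lt_compat; assumption). nra. Qed.

Lemma Rdiv_ge1 y d : 0 < d -> d <= y -> 1 <= y / d.
Proof.
  intros. apply Rmult_le_reg_r with d; [assumption|].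
  unfold Rdiv. rewrite Rmult_assoc, Rinv_l; lra.
Qed.

Lemma Rmult_nonneg_nonpos x y : 0 <= x -> y <= 0 -> x * y <= 0.
Proof. intros; nra. Qed.

Lemma Rabs_le_iff x L : Rabs x <= L <-> -L <= x <= L.
Proof.
  split; [|apply Rabs_le]. intros H.
  unfold Rabs in H. destruct (Rcase_abs x); lra.
Qed.

Lemma Rabs_comb2 c1 c2 x1 x2 L1 L2 : 0 <= c1 -> 0 <= c2 -> Rabs x1 <= L1 -> Rabs x2 <= L2 ->
  Rabs (c1 * x1 + c2 * x2) <= c1 * L1 + c2 * L2.
Proof. intros. rewrite Rabs_le_iff in *. split; nra. Qed.

Lemma Rabs_comb3 c1 c2 c3 x1 x2 x3 L : 0 <= c1 -> 0 <= c2 -> 0 <= c3 ->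
  Rabs x1 <= L -> Rabs x2 <= L -> Rabs x3 <= L ->
  Rabs (c1 * x1 + c2 * x2 + c3 * x3) <= (c1 + c2 + c3) * L.
Proof. intros. rewrite Rabs_le_iff in *. split; nra. Qed.

Lemma Rmin_lipschitz t1 t2 s1 s2 e : Rabs (t1 - s1) <= e -> Rabs (t2 - s2) <= e ->
  Rabs (Rmin t1 t2 - Rmin s1 s2) <= e.
Proof. intros H1 H2. rewrite Rabs_le_iff in *. unfold Rmin. repeat destruct (Rle_dec _ _); lra. Qed.

Lemma lt_div_INR t a n : 0 < INR n -> (a * INR n < t <-> a < t / INR n).
Proof.
  intros H. split; intros H1.
  - apply Rmult_lt_reg_r with (INR n); [exact H|]. unfold Rdiv. rewrite Rmult_assoc, Rinv_l; lra.
  - apply Rmult_lt_reg_r with (/ INR n); [apply Rinv_0_lt_compat; exact H|].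
    rewrite Rmult_assoc, Rinv_r, Rmult_1_r by lra. exact H1.
Qed.

Lemma pow_unit_interval x m : 0 <= x <= 1 -> 0 <= x ^ m <= 1.
Proof. intros H. split; [apply pow_le; lra|]. rewrite <- (pow1 m). apply pow_incr; lra. Qed.

Lemma pow_increment_le x d m : 0 <= x -> 0 <= d -> x + d <= 1 -> 0 <= (x + d) ^ m - x ^ m <= INR m * d.
Proof.
  intros Hx Hd H1. induction m as [|m IH]; [simpl; lra|].
  rewrite S_INR. simpl.
  pose proof (pow_unit_interval x m ltac:(lra)). pose proof (pow_unit_interval (x + d) m ltac:(lra)).
  replace ((x + d) * (x + d) ^ m - x * x ^ m) with ((x + d) * ((x + d) ^ m - x ^ m) + d * x ^ m) by ring.
  split; [apply Rplus_le_le_0_compat; apply Rmult_le_pos; lra|].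
  assert ((x + d) * ((x + d) ^ m - x ^ m) <= INR m * d) by nra.
  assert (d * x ^ m <= d) by nra. lra.
Qed.

Lemma ln_le_sub_1 x : 0 < x -> ln x <= x - 1.
Proof. intros H. pose proof (exp_ineq1_le (ln x)). rewrite exp_ln in * by exact H. lra. Qed.

Lemma Un_cv_eventually u v l N0 : (forall n, (N0 <= n)%nat -> u n = v n) -> Un_cv v l -> Un_cv u l.
Proof.
  intros He Hv eps Heps. destruct (Hv eps Heps) as [N HN]. exists (Nat.max N N0).
  intros n Hn. rewrite He by lia. apply HN. lia.
Qed.

Lemma Un_cv_const c : Un_cv (fun _ => c) c.
Proof. intros eps Heps. exists 0%nat. intros. unfold Rdist. rewrite Rminus_diag, Rabs_R0; lra. Qed.

Lemma Un_cv_of_rate u L C D N0 : 0 <= C ->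
  (forall n, (N0 <= n)%nat -> D < INR n /\ Rabs (u n - L) <= C / (INR n - D)) -> Un_cv u L.
Proof.
  intros HC H eps Heps. destruct (INR_unbounded (D + C / eps)) as [N HN].
  exists (Nat.max N N0). intros n Hn. destruct (H n) as [H1 H2]; [lia|].
  unfold Rdist. eapply Rle_lt_trans; [apply H2|].
  assert (INR N <= INR n) by (apply le_INR; lia).
  assert (0 <= C / eps) by (apply Rdiv_nonneg; lra).
  apply Rmult_lt_reg_r with (INR n - D); [lra|]. unfold Rdiv. rewrite Rmult_assoc, Rinv_l by lra.
  assert (C < eps * (INR n - D)); [|lra].
  apply Rmult_lt_reg_l with (/ eps); [apply Rinv_0_lt_compat; lra|].
  rewrite <- Rmult_assoc, Rinv_l by lra. unfold Rdiv in *. lra.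
Qed.

Lemma eventually_uniform (P : nat -> nat -> Prop) J :
  (forall l, (l <= J)%nat -> exists N, forall n, (N <= n)%nat -> P l n) ->
  exists N, forall n, (N <= n)%nat -> forall l, (l <= J)%nat -> P l n.
Proof.
  induction J as [|J IH]; intros H.
  - destruct (H 0%nat) as [N HN]; [lia|]. exists N. intros n Hn l Hl.
    replace l with 0%nat by lia. auto.
  - destruct IH as [N1 HN1]; [intros; apply H; lia|].
    destruct (H (S J)) as [N2 HN2]; [lia|].
    exists (Nat.max N1 N2). intros n Hn l Hl.
    destruct (Nat.eq_dec l (S J)) as [->|]; [apply HN2; lia | apply HN1; lia].
Qed.

Lemma Un_cv_rel_error (p m mu : nat -> R) L eta :
  (forall k, 0 <= m k) -> (forall k, 0 <= mu k) -> Un_cv (fun k => m k * mu k) eta ->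
  (forall eps, 0 < eps -> exists K, forall k, (K <= k)%nat -> Rabs (p k - L * mu k) <= eps * mu k) ->
  Un_cv (fun k => m k * p k) (L * eta).
Proof.
  intros Hm Hmu Hmmu Hrel.
  assert (Hsmall : Un_cv (fun k => m k * (p k - L * mu k)) 0).
  { intros e He. set (B := Rabs eta + 1). assert (HB : 0 < B) by (pose proof (Rabs_pos eta); unfold B; lra).
    destruct (Hmmu 1 ltac:(lra)) as [K1 HK1].
    destruct (Hrel (e / (2 * B))) as [K2 HK2]; [apply Rdiv_lt_0_compat; lra|].
    exists (Nat.max K1 K2). intros k Hk. specialize (HK1 k ltac:(lia)). specialize (HK2 k ltac:(lia)).
    unfold Rdist in *. rewrite Rminus_0_r, Rabs_mult, (Rabs_right (m k)) by (apply Rle_ge, Hm).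
    assert (0 <= m k * mu k) by (apply Rmult_le_pos; auto).
    assert (m k * mu k <= B).
    { pose proof (Rabs_triang_inv (m k * mu k) eta). rewrite Rabs_right in * by lra. unfold B; lra. }
    assert (e / (2 * B) * B = e / 2) by (field; lra).
    assert (0 <= e / (2 * B)) by (apply Rdiv_nonneg; lra).
    apply Rle_lt_trans with (m k * (e / (2 * B) * mu k)); [apply Rmult_le_compat_l; auto|].
    replace (m k * (e / (2 * B) * mu k)) with (e / (2 * B) * (m k * mu k)) by ring. nra. }
  apply Un_cv_ext with (un := fun k => m k * (p k - L * mu k) + L * (m k * mu k)); [intros; ring|].
  replace (L * eta) with (0 + L * eta) by ring.
  apply CV_plus; [exact Hsmall | apply CV_mult; [apply Un_cv_const | exact Hmmu]].
Qed.

(** * Reduction to a single site *)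

Lemma site_prob_sum mu x : rsum all_nucs (site_prob mu x) = 1.
Proof. destruct x; unfold rsum, site_prob; simpl; lra. Qed.

Lemma rsum_all_genomes_S m (F : list Nuc -> R) :
  rsum (all_genomes (S m)) F = rsum all_nucs (fun x => rsum (all_genomes m) (fun w => F (x :: w))).
Proof.
  change (all_genomes (S m)) with
    (flat_map (fun x => map (fun g => x :: g) (all_genomes m)) all_nucs).
  rewrite rsum_flat_map. apply rsum_ext_in; intros. apply rsum_map.
Qed.

Lemma genome_prob_sum mu v : rsum (all_genomes (length v)) (genome_prob mu v) = 1.
Proof.
  induction v as [|x v IH]; [unfold rsum; simpl; lra|].
  simpl length. rewrite rsum_all_genomes_S, <- (site_prob_sum mu x).
  apply rsum_ext_in; intros y _. cbn [genome_prob]. rewrite rsum_scal, IH; lra.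
Qed.

Lemma genome_prob_marginal mu v i (K : Nuc -> R) : (i < length v)%nat ->
  rsum (all_genomes (length v)) (fun w => genome_prob mu v w * K (nth i w NA)) =
  rsum all_nucs (fun y => site_prob mu (nth i v NA) y * K y).
Proof.
  revert i; induction v as [|x v IH]; intros i Hi; simpl in Hi; [lia|].
  simpl length. rewrite rsum_all_genomes_S. destruct i as [|i]; cbn [genome_prob nth].
  - apply rsum_ext_in; intros y _.
    rewrite <- (Rmult_1_r (site_prob mu x y * K y)), <- (genome_prob_sum mu v), <- rsum_scal.
    apply rsum_ext_in; intros; lra.
  - rewrite <- IH by lia.
    transitivity (rsum all_nucs (fun y => site_prob mu x y *
      rsum (all_genomes (length v)) (fun w => genome_prob mu v w * K (nth i w NA)))).
    + apply rsum_ext_in; intros y _. rewrite <- rsum_scal. apply rsum_ext_in; intros; lra.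
    + rewrite rsum_scal_r, site_prob_sum; lra.
Qed.

Lemma all_genomes_length m w : In w (all_genomes m) -> length w = m.
Proof.
  revert w; induction m as [|m IH]; intros w H.
  - destruct H as [<-|[]]; reflexivity.
  - apply in_flat_map in H. destruct H as [x [_ H]]. apply in_map_iff in H.
    destruct H as [g [<- Hg]]. simpl; f_equal; auto.
Qed.

(* One division in a population of [k] cells, [b] of them mutant at the site: the dividing cell
   is a mutant with probability [b / k]; a daughter of a mutant stays mutant with probability
   [keep_prob mu], a daughter of a wild-type cell mutates with probability [mu]. *)
Definition keep_prob (mu : R) : R := 1 - mu / 3.

Definition mutant_div (mu : R) (g : nat -> R) (b : nat) : R :=
  (1 - keep_prob mu) ^ 2 * g (b - 1)%nat + 2 * keep_prob mu * (1 - keep_prob mu) * g b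
  + keep_prob mu ^ 2 * g (S b).

Definition wild_div (mu : R) (g : nat -> R) (b : nat) : R :=
  (1 - mu) ^ 2 * g b + 2 * mu * (1 - mu) * g (S b) + mu ^ 2 * g (S (S b)).

(* Capped so that it is a probability for every [b], including the unreachable [b > k]. *)
Definition mutant_frac (k b : nat) : R := INR (Nat.min b k) / INR k.

Definition div_step (mu : R) (k : nat) (g : nat -> R) (b : nat) : R :=
  mutant_frac k b * mutant_div mu g b + (1 - mutant_frac k b) * wild_div mu g b.

Fixpoint evolve (mu : R) (k r : nat) (g : nat -> R) : nat -> R :=
  match r with O => g | S r' => div_step mu k (evolve mu (S k) r' g) end.

Section OneSite.
Variables (mu : R) (m : nat) (u : list Nuc) (i : nat).

Definition mut_ind (y : Nuc) : nat := if nuc_eqb y (nth i u NA) then 0%nat else 1%nat.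

Lemma B_count_cons c cs : B_count u i (c :: cs) = (mut_ind (nth i c NA) + B_count u i cs)%nat.
Proof. unfold B_count, mut_ind. simpl. destruct (nuc_eqb _ _); reflexivity. Qed.

Lemma B_count_app l1 l2 : B_count u i (l1 ++ l2) = (B_count u i l1 + B_count u i l2)%nat.
Proof. unfold B_count. rewrite filter_app, length_app. reflexivity. Qed.

Lemma B_count_le cells : (B_count u i cells <= length cells)%nat.
Proof. apply filter_length_le. Qed.

Lemma cells_nth_split (cells : list (list Nuc)) j : (j < length cells)%nat ->
  cells = firstn j cells ++ nth j cells nil :: skipn (S j) cells.
Proof.
  revert j; induction cells as [|c cs IH]; intros j Hj; simpl in Hj; [lia|].
  destruct j; simpl; [reflexivity|]. f_equal. apply IH; lia.
Qed.

Lemma B_count_divide_at cells j w1 w2 : (j < length cells)%nat ->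
  (B_count u i (divide_at cells j w1 w2) + mut_ind (nth i (nth j cells nil) NA) =
   B_count u i cells + mut_ind (nth i w1 NA) + mut_ind (nth i w2 NA))%nat.
Proof.
  intros Hj. unfold divide_at.
  rewrite (f_equal (B_count u i) (cells_nth_split cells j Hj)).
  rewrite !B_count_app, !B_count_cons. lia.
Qed.

Lemma mut_ind_le_B_count cells j : (j < length cells)%nat ->
  (mut_ind (nth i (nth j cells nil) NA) <= B_count u i cells)%nat.
Proof.
  intros Hj. rewrite (f_equal (B_count u i) (cells_nth_split cells j Hj)).
  rewrite B_count_app, B_count_cons. lia.
Qed.

Lemma length_divide_at cells j w1 w2 : (j < length cells)%nat ->
  length (divide_at cells j w1 w2) = S (length cells).
Proof.
  intros Hj. unfold divide_at. rewrite length_app, length_firstn. cbn [length].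
  rewrite length_skipn. lia.
Qed.

Lemma Forall_divide_at (P : list Nuc -> Prop) cells j w1 w2 : (j < length cells)%nat ->
  Forall P cells -> P w1 -> P w2 -> Forall P (divide_at cells j w1 w2).
Proof.
  intros Hj HP H1 H2. rewrite (cells_nth_split cells j Hj) in HP.
  apply Forall_app in HP as [HP1 HP2]. inversion HP2; subst.
  apply Forall_app; repeat constructor; assumption.
Qed.

Lemma site_mut_expect x (K : nat -> R) :
  rsum all_nucs (fun y => site_prob mu x y * K (mut_ind y)) =
  if nuc_eqb x (nth i u NA) then (1 - mu) * K 0%nat + mu * K 1%nat
  else mu / 3 * K 0%nat + (1 - mu / 3) * K 1%nat.
Proof. unfold mut_ind. destruct x, (nth i u NA); unfold rsum, site_prob; simpl; lra. Qed.

Lemma daughters_expect v (Phi : nat -> nat -> R) : (i < length v)%nat ->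
  rsum (all_genomes (length v)) (fun w1 => rsum (all_genomes (length v)) (fun w2 =>
    genome_prob mu v w1 * genome_prob mu v w2 * Phi (mut_ind (nth i w1 NA)) (mut_ind (nth i w2 NA)))) =
  if nuc_eqb (nth i v NA) (nth i u NA) then
    (1 - mu) * ((1 - mu) * Phi 0%nat 0%nat + mu * Phi 0%nat 1%nat)
    + mu * ((1 - mu) * Phi 1%nat 0%nat + mu * Phi 1%nat 1%nat)
  else mu / 3 * (mu / 3 * Phi 0%nat 0%nat + (1 - mu / 3) * Phi 0%nat 1%nat)
    + (1 - mu / 3) * (mu / 3 * Phi 1%nat 0%nat + (1 - mu / 3) * Phi 1%nat 1%nat).
Proof.
  intros Hi. set (x := nth i v NA).
  transitivity (rsum (all_genomes (length v)) (fun w1 => genome_prob mu v w1 *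
    rsum all_nucs (fun y => site_prob mu x y * Phi (mut_ind (nth i w1 NA)) (mut_ind y)))).
  { apply rsum_ext_in; intros w1 _.
    rewrite <- (genome_prob_marginal mu v i (fun y => Phi _ (mut_ind y))), <- rsum_scal by exact Hi.
    apply rsum_ext_in; intros; lra. }
  rewrite (genome_prob_marginal mu v i
    (fun y1 => rsum all_nucs (fun y => site_prob mu x y * Phi (mut_ind y1) (mut_ind y)))) by exact Hi.
  fold x.
  rewrite (site_mut_expect x (fun z => rsum all_nucs (fun y => site_prob mu x y * Phi z (mut_ind y)))).
  rewrite !(site_mut_expect x (fun z => Phi _ z)).
  destruct (nuc_eqb x (nth i u NA)); lra.
Qed.

Lemma divide_expect cells j (H : nat -> R) :
  let v := nth j cells nil in let b := B_count u i cells in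
  (j < length cells)%nat -> (i < length v)%nat ->
  rsum (all_genomes (length v)) (fun w1 => rsum (all_genomes (length v)) (fun w2 =>
    genome_prob mu v w1 * genome_prob mu v w2 * H (B_count u i (divide_at cells j w1 w2)))) =
  if nuc_eqb (nth i v NA) (nth i u NA) then wild_div mu H b else mutant_div mu H b.
Proof.
  intros v b Hj Hi. pose proof (mut_ind_le_B_count cells j Hj) as Hle. fold v b in Hle.
  set (b0 := (b - mut_ind (nth i v NA))%nat).
  transitivity (rsum (all_genomes (length v)) (fun w1 => rsum (all_genomes (length v)) (fun w2 =>
    genome_prob mu v w1 * genome_prob mu v w2 *
    (fun z1 z2 => H (b0 + z1 + z2)%nat) (mut_ind (nth i w1 NA)) (mut_ind (nth i w2 NA))))).
  { apply rsum_ext_in; intros w1 _. apply rsum_ext_in; intros w2 _. do 2 f_equal.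
    pose proof (B_count_divide_at cells j w1 w2 Hj). unfold b0, b, v in *. lia. }
  rewrite (daughters_expect v (fun z1 z2 => H (b0 + z1 + z2)%nat)) by exact Hi.
  unfold b0 in *. destruct (nuc_eqb (nth i v NA) (nth i u NA)) eqn:E.
  - assert (Hm : mut_ind (nth i v NA) = 0%nat) by (unfold mut_ind; rewrite E; reflexivity).
    rewrite Hm, Nat.sub_0_r, !Nat.add_0_r, !Nat.add_1_r. unfold wild_div. lra.
  - assert (Hm : mut_ind (nth i v NA) = 1%nat) by (unfold mut_ind; rewrite E; reflexivity).
    rewrite Hm in *. unfold mutant_div, keep_prob.
    replace (b - 1 + 1 + 1)%nat with (S b) by lia.
    replace (b - 1 + 0 + 1)%nat with b by lia. replace (b - 1 + 1 + 0)%nat with b by lia.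
    rewrite !Nat.add_0_r. lra.
Qed.

Lemma rsum_mutant_split (cells : list (list Nuc)) X Y :
  rsum cells (fun c => if nuc_eqb (nth i c NA) (nth i u NA) then Y else X) =
  INR (B_count u i cells) * X + (INR (length cells) - INR (B_count u i cells)) * Y.
Proof.
  induction cells as [|c cs IH]; [unfold rsum; simpl; lra|].
  rewrite rsum_cons, IH, B_count_cons. simpl length. rewrite S_INR, plus_INR.
  unfold mut_ind. destruct (nuc_eqb _ _); simpl; lra.
Qed.

Lemma expect_after_B_count r : forall cells h,
  (1 <= length cells)%nat -> Forall (fun c => length c = m) cells -> (i < m)%nat ->
  expect_after r mu m (fun cs => h (B_count u i cs)) cells =
  evolve mu (length cells) r h (B_count u i cells).
Proof.
  induction r as [|r IH]; intros cells h HL HF Hi; [reflexivity|].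
  cbn [expect_after evolve].
  set (L := length cells) in *. set (b := B_count u i cells).
  set (H := evolve mu (S L) r h).
  transitivity (/ INR L * rsum (seq 0 L) (fun j => (fun v =>
    if nuc_eqb (nth i v NA) (nth i u NA) then wild_div mu H b else mutant_div mu H b) (nth j cells nil))).
  { f_equal. apply rsum_ext_in. intros j Hj. apply in_seq in Hj.
    assert (Hj' : (j < L)%nat) by lia.
    assert (Hv : length (nth j cells nil) = m).
    { rewrite Forall_forall in HF. apply HF, nth_In. exact Hj'. }
    pose proof (divide_expect cells j H Hj') as E. cbv zeta in E. fold b in E.
    rewrite Hv in E. rewrite <- E by lia.
    apply rsum_ext_in; intros w1 Hw1. apply rsum_ext_in; intros w2 Hw2. f_equal.
    apply all_genomes_length in Hw1, Hw2.
    unfold H, L. rewrite <- (length_divide_at cells j w1 w2 Hj').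
    apply IH; [rewrite length_divide_at; lia | apply Forall_divide_at; auto | exact Hi]. }
  unfold L. rewrite (rsum_seq_nth cells nil (fun v =>
    if nuc_eqb (nth i v NA) (nth i u NA) then wild_div mu H b else mutant_div mu H b)).
  rewrite rsum_mutant_split. fold b L.
  unfold div_step, mutant_frac. rewrite Nat.min_l by apply B_count_le.
  assert (0 < INR L) by (apply lt_0_INR; lia). field. lra.
Qed.

End OneSite.

Lemma expect_after_rsum {A} r mu m (l : list A) (F : A -> list (list Nuc) -> R) : forall cells,
  expect_after r mu m (fun cs => rsum l (fun x => F x cs)) cells =
  rsum l (fun x => expect_after r mu m (F x) cells).
Proof.
  induction r as [|r IH]; intros cells; [reflexivity|]. cbn [expect_after].
  rewrite rsum_scal. f_equal. symmetry.
  rewrite rsum_swap. apply rsum_ext_in; intros j _.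
  rewrite rsum_swap. apply rsum_ext_in; intros w1 _.
  rewrite rsum_swap. apply rsum_ext_in; intros w2 _.
  rewrite IH, rsum_scal. reflexivity.
Qed.

Definition in_window (a : R) (n b : nat) : R := dirac_open a (INR b / INR n).

Definition window_prob (a : R) (n : nat) (mu : R) : R := evolve mu 1 (n - 1) (in_window a n) 0%nat.

Lemma nuc_eqb_refl x : nuc_eqb x x = true.
Proof. destruct x; reflexivity. Qed.

Lemma expected_stat_eq a n mu m u : length u = m ->
  expected_stat a n mu m u = INR m * window_prob a n mu.
Proof.
  intros Hu. unfold expected_stat, stat. rewrite expect_after_rsum.
  rewrite <- (length_seq m 0) at 2. rewrite <- rsum_const.
  apply rsum_ext_in. intros i Hi. apply in_seq in Hi.
  etransitivity; [apply (expect_after_B_count mu m u i (n - 1) [u] (in_window a n))|].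
  - simpl; lia.
  - repeat constructor. exact Hu.
  - lia.
  - unfold window_prob, B_count. cbn [filter length]. rewrite nuc_eqb_refl. reflexivity.
Qed.

(** * The backward recursion *)

Lemma mutant_frac_bounds k b : (1 <= k)%nat -> 0 <= mutant_frac k b <= 1.
Proof.
  intros Hk. unfold mutant_frac. assert (0 < INR k) by (apply lt_0_INR; lia).
  split; [apply Rdiv_nonneg; [apply pos_INR | lra]|].
  apply Rmult_le_reg_r with (INR k); [lra|]. unfold Rdiv.
  rewrite Rmult_assoc, Rinv_l, Rmult_1_r, Rmult_1_l by lra. apply le_INR. lia.
Qed.

Lemma mutant_frac_le k b : (1 <= k)%nat -> mutant_frac k b <= INR b / INR k.
Proof.
  intros Hk. unfold mutant_frac, Rdiv. apply Rmult_le_compat_r.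
  - left; apply Rinv_0_lt_compat, lt_0_INR; lia.
  - apply le_INR; lia.
Qed.

Lemma mutant_frac_step k b : (1 <= k)%nat ->
  0 <= mutant_frac k (S b) - mutant_frac k b <= / INR k.
Proof.
  intros Hk. unfold mutant_frac. assert (0 < / INR k) by (apply Rinv_0_lt_compat, lt_0_INR; lia).
  destruct (Nat.le_gt_cases k b) as [Hkb|Hkb].
  - rewrite !Nat.min_r by lia. lra.
  - rewrite !Nat.min_l by lia. rewrite S_INR. unfold Rdiv. lra.
Qed.

Lemma mutant_frac_0 k : mutant_frac k 0 = 0.
Proof. unfold mutant_frac, Rdiv. simpl. lra. Qed.

Lemma keep_prob_bounds mu : 0 <= mu <= 1 -> 2 / 3 <= keep_prob mu <= 1.
Proof. unfold keep_prob; lra. Qed.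

Lemma div_step_ext mu k g g' : (forall b, g b = g' b) -> forall b, div_step mu k g b = div_step mu k g' b.
Proof. intros H b. unfold div_step, mutant_div, wild_div. rewrite !H. reflexivity. Qed.

Lemma div_step_mono mu k g g' : 0 <= mu <= 1 -> (1 <= k)%nat -> (forall b, g b <= g' b) ->
  forall b, div_step mu k g b <= div_step mu k g' b.
Proof.
  intros Hmu Hk H b. unfold div_step, mutant_div, wild_div.
  pose proof (mutant_frac_bounds k b Hk). pose proof (keep_prob_bounds mu Hmu).
  set (w := mutant_frac k b) in *. set (q := keep_prob mu) in *.
  apply Rplus_le_compat; apply Rmult_le_compat_l; try lra;
    repeat apply Rplus_le_compat; apply Rmult_le_compat_l; auto; nra.
Qed.

Lemma div_step_lin mu k al be g g' b :
  div_step mu k (fun x => al * g x + be * g' x) b = al * div_step mu k g b + be * div_step mu k g' b.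
Proof. unfold div_step, mutant_div, wild_div. ring. Qed.

Lemma div_step_const mu k c b : div_step mu k (fun _ => c) b = c.
Proof. unfold div_step, mutant_div, wild_div. ring. Qed.

Lemma evolve_ext mu r : forall k g g', (forall b, g b = g' b) ->
  forall b, evolve mu k r g b = evolve mu k r g' b.
Proof.
  induction r as [|r IH]; intros k g g' H b; simpl; auto.
  apply div_step_ext. intros; apply IH; auto.
Qed.

Lemma evolve_mono mu r : forall k g g', 0 <= mu <= 1 -> (1 <= k)%nat -> (forall b, g b <= g' b) ->
  forall b, evolve mu k r g b <= evolve mu k r g' b.
Proof.
  induction r as [|r IH]; intros k g g' Hmu Hk H b; simpl; auto.
  apply div_step_mono; auto.
Qed.

Lemma evolve_lin mu r : forall k al be g g' b,
  evolve mu k r (fun x => al * g x + be * g' x) b = al * evolve mu k r g b + be * evolve mu k r g' b.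
Proof.
  induction r as [|r IH]; intros k al be g g' b; simpl; auto.
  rewrite <- div_step_lin. apply div_step_ext. intros; apply IH.
Qed.

Lemma evolve_const mu r : forall k c b, evolve mu k r (fun _ => c) b = c.
Proof.
  induction r as [|r IH]; intros k c b; simpl; auto.
  rewrite (div_step_ext mu k _ (fun _ => c)); [apply div_step_const | intros; apply IH].
Qed.

Lemma evolve_last mu r : forall k g b,
  evolve mu k (S r) g b = evolve mu k r (div_step mu (k + r) g) b.
Proof.
  induction r as [|r IH]; intros k g b; [simpl; rewrite Nat.add_0_r; reflexivity|].
  change (div_step mu k (evolve mu (S k) (S r) g) b =
          div_step mu k (evolve mu (S k) r (div_step mu (k + S r) g)) b).
  apply div_step_ext. intros x. rewrite IH, Nat.add_succ_comm. reflexivity.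
Qed.

Definition evolve_to (mu : R) (j n : nat) (g : nat -> R) : nat -> R := evolve mu j (n - j) g.

Lemma evolve_to_step mu j n g b : (j < n)%nat ->
  evolve_to mu j n g b = div_step mu j (evolve_to mu (S j) n g) b.
Proof. intros H. unfold evolve_to. replace (n - j)%nat with (S (n - S j)) by lia. reflexivity. Qed.

Lemma evolve_to_self mu n g b : evolve_to mu n n g b = g b.
Proof. unfold evolve_to. rewrite Nat.sub_diag. reflexivity. Qed.

Lemma evolve_to_mono mu j n g g' : 0 <= mu <= 1 -> (1 <= j)%nat -> (forall b, g b <= g' b) ->
  forall b, evolve_to mu j n g b <= evolve_to mu j n g' b.
Proof. intros. apply evolve_mono; auto. Qed.

Definition level_change (mu : R) (n : nat) (g : nat -> R) (l : nat) : R :=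
  (mu ^ 2 - 2 * mu) * evolve_to mu l n g 0%nat + 2 * mu * (1 - mu) * evolve_to mu l n g 1%nat
  + mu ^ 2 * evolve_to mu l n g 2%nat.

(* From state 0 only the wild-type branch is taken, so the value at 0 telescopes over the sizes. *)
Lemma evolve_to_at_0 mu n g j : (1 <= j <= n)%nat ->
  evolve_to mu j n g 0%nat = g 0%nat + rsum (seq (S j) (n - j)) (level_change mu n g).
Proof.
  remember (n - j)%nat as d eqn:Hd. revert j Hd. induction d as [|d IH]; intros j Hd Hj.
  - replace j with n by lia. rewrite evolve_to_self. unfold rsum; simpl; lra.
  - rewrite evolve_to_step by lia. unfold div_step. rewrite mutant_frac_0.
    rewrite <- cons_seq, rsum_cons. unfold level_change at 1, wild_div.
    rewrite (IH (S j)) by lia. ring.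
Qed.

(** * Harmonic numbers *)

Definition harm_tail (j n : nat) : R := rsum (seq (S j) (n - j)) (fun i => / INR i).
Definition harm (n : nat) : R := harm_tail 0 n.

Lemma harm_tail_step j n : (j < n)%nat -> harm_tail j n = / INR (S j) + harm_tail (S j) n.
Proof. intros H. unfold harm_tail. replace (n - j)%nat with (S (n - S j)) by lia. reflexivity. Qed.

Lemma harm_tail_nil j n : (n <= j)%nat -> harm_tail j n = 0.
Proof. intros H. unfold harm_tail. replace (n - j)%nat with 0%nat by lia. reflexivity. Qed.

Lemma harm_tail_nonneg j n : 0 <= harm_tail j n.
Proof.
  apply rsum_nonneg. intros x Hx. apply in_seq in Hx.
  left. apply Rinv_0_lt_compat, lt_0_INR. lia.
Qed.

Lemma harm_tail_le_harm j n : harm_tail j n <= harm n.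
Proof.
  induction j as [|j IH]; [unfold harm; lra|].
  destruct (Nat.lt_ge_cases j n).
  - rewrite harm_tail_step in IH by assumption.
    assert (0 < / INR (S j)) by (apply Rinv_0_lt_compat, lt_0_INR; lia). lra.
  - rewrite harm_tail_nil by lia. apply harm_tail_nonneg.
Qed.

Lemma harm_ge_1 n : (1 <= n)%nat -> 1 <= harm n.
Proof.
  intros H. unfold harm, harm_tail. replace (n - 0)%nat with (S (n - 1)) by lia.
  rewrite <- cons_seq, rsum_cons. simpl INR. rewrite Rinv_1.
  assert (0 <= rsum (seq 2 (n - 1)) (fun i => / INR i)); [|lra].
  apply rsum_nonneg. intros x Hx. apply in_seq in Hx. left; apply Rinv_0_lt_compat, lt_0_INR; lia.
Qed.

Lemma rsum_inv_le_harm s len n : (1 <= s)%nat -> (s + len <= S n)%nat ->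
  rsum (seq s len) (fun l => / INR l) <= harm n.
Proof.
  intros Hs Hl. unfold harm, harm_tail. rewrite Nat.sub_0_r.
  replace (seq 1 n) with (seq 1 ((s - 1) + (len + (S n - s - len)))) by (f_equal; lia).
  rewrite !seq_app, !rsum_app. replace (1 + (s - 1))%nat with s by lia.
  assert (forall s' len', 0 <= rsum (seq (S s') len') (fun i => / INR i)) as Hpos.
  { intros s' len'. apply rsum_nonneg. intros x Hx. apply in_seq in Hx.
    left; apply Rinv_0_lt_compat, lt_0_INR; lia. }
  pose proof (Hpos 0%nat (s - 1)%nat). pose proof (Hpos (s + len - 1)%nat (S n - s - len)%nat).
  replace (S (s + len - 1)) with (s + len)%nat in * by lia. lra.
Qed.

Lemma harm_S n : harm (S n) = harm n + / INR (S n).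
Proof.
  unfold harm, harm_tail. rewrite !Nat.sub_0_r, seq_S, rsum_app.
  replace (1 + n)%nat with (S n) by lia. unfold rsum at 2; simpl. ring.
Qed.

Lemma harm_le_1_ln n : (1 <= n)%nat -> harm n <= 1 + ln (INR n).
Proof.
  induction n as [|n IH]; intros Hn; [lia|].
  destruct (Nat.eq_dec n 0) as [->|]; [unfold harm, harm_tail, rsum; simpl; rewrite ln_1; lra|].
  rewrite harm_S. specialize (IH ltac:(lia)).
  assert (0 < INR n) by (apply lt_0_INR; lia). rewrite S_INR.
  assert (ln (INR n / (INR n + 1)) <= INR n / (INR n + 1) - 1) by (apply ln_le_sub_1, Rdiv_lt_0_compat; lra).
  unfold Rdiv in *. rewrite ln_mult, ln_Rinv in * by (try apply Rinv_0_lt_compat; lra).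
  replace (INR n * / (INR n + 1) - 1) with (- / (INR n + 1)) in * by (field; lra). lra.
Qed.

(* [ln x = 4 ln (x^(1/4)) <= 4 x^(1/4)], so [harm n ^ 2 <= 25 sqrt n]. *)
Lemma harm_sq_div_small e : 0 < e -> exists M, forall n, (M <= n)%nat -> harm n ^ 2 / INR n <= e.
Proof.
  intros He. destruct (INR_unbounded ((25 / e) ^ 2 + 1)) as [M HM]. exists M. intros n HnM.
  apply le_INR in HnM. assert (H25 : 0 <= (25 / e) ^ 2) by nra.
  assert (Hn1 : (1 <= n)%nat) by (apply INR_le; simpl; lra).
  pose proof (harm_le_1_ln n Hn1). pose proof (harm_tail_nonneg 0 n). fold (harm n) in *.
  set (x := INR n) in *. set (s := sqrt x). set (t := sqrt s).
  assert (Hs : s * s = x) by (apply sqrt_sqrt; lra).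
  assert (Hs1 : 1 <= s) by (unfold s; rewrite <- sqrt_1; apply sqrt_le_1_alt; lra).
  assert (Ht : t * t = s) by (apply sqrt_sqrt; lra).
  assert (Ht1 : 1 <= t) by (unfold t; rewrite <- sqrt_1; apply sqrt_le_1_alt; lra).
  assert (Hl : ln x = 4 * ln t) by (rewrite <- Hs, <- Ht, !ln_mult by nra; ring).
  pose proof (ln_le_sub_1 t ltac:(lra)).
  assert (0 <= ln t).
  { destruct (Req_dec t 1) as [E|]; [rewrite E, ln_1; lra|].
    rewrite <- ln_1. left. apply ln_increasing; lra. }
  assert (harm n ^ 2 <= 25 * s) by nra.
  assert (25 / e <= s).
  { apply Rsqr_incr_0_var; [unfold Rsqr; rewrite Hs; simpl in H25 |- *; nra | lra]. }
  assert (25 <= e * s) by (assert (25 / e * e = 25) by (field; lra); nra).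
  apply Rle_trans with (25 * s / x); [apply Rmult_le_compat_r; [left; apply Rinv_0_lt_compat|]; lra|].
  rewrite <- Hs. replace (25 * s / (s * s)) with (25 / s) by (field; lra).
  apply Rmult_le_reg_r with s; [lra|]. unfold Rdiv. rewrite Rmult_assoc, Rinv_l; lra.
Qed.

(** * A second-moment supersolution *)

Lemma div_step_upper mu k g b : 0 <= mu <= 1 -> (1 <= k)%nat -> (forall x, g x <= g (S x)) ->
  div_step mu k g b <= g b + INR b / INR k * (g (S b) - g b) + 2 * mu * (g (S (S b)) - g b).
Proof.
  intros Hmu Hk Hg.
  pose proof (mutant_frac_bounds k b Hk). pose proof (mutant_frac_le k b Hk).
  pose proof (keep_prob_bounds mu Hmu). pose proof (Hg b). pose proof (Hg (S b)).
  assert (Hpred : g (b - 1)%nat <= g b).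
  { destruct b; [simpl; lra|]. replace (S b - 1)%nat with b by lia. apply Hg. }
  assert (HM : mutant_div mu g b <= g (S b)).
  { unfold mutant_div. set (q := keep_prob mu) in *.
    assert ((1 - q) ^ 2 * (g (b - 1)%nat - g (S b)) <= 0) by (apply Rmult_nonneg_nonpos; nra).
    assert (2 * q * (1 - q) * (g b - g (S b)) <= 0) by (apply Rmult_nonneg_nonpos; nra).
    nra. }
  assert (HN : wild_div mu g b <= g b + 2 * mu * (g (S (S b)) - g b)).
  { unfold wild_div.
    assert (0 <= 2 * mu * (1 - mu) * (g (S (S b)) - g (S b))) by (apply Rmult_le_pos; nra).
    assert (0 <= mu ^ 2 * (g (S (S b)) - g b)) by (apply Rmult_le_pos; nra).
    nra. }
  unfold div_step. set (w := mutant_frac k b) in *.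
  assert (w * (g (S b) - g b) <= INR b / INR k * (g (S b) - g b)) by (apply Rmult_le_compat_r; lra).
  assert (0 <= w * (2 * mu * (g (S (S b)) - g b))) by (apply Rmult_le_pos; nra).
  nra.
Qed.

(* A supersolution of the backward recursion: at [j = n] it dominates [in_window a n]
   since [a n < b] there, and [div_step] does not increase it. *)
Definition value_bound (a mu : R) (n j b : nat) : R :=
  / a ^ 2 * (INR b * (INR b + 1) / (INR j * (INR j + 1)) + 8 * mu * harm_tail j n * INR b / INR j
             + 12 * mu / (INR j + 1) + 32 * mu ^ 2 * harm n * harm_tail j n).

Lemma value_bound_nonneg a mu n j b : 0 < a -> 0 <= mu -> (1 <= j)%nat -> 0 <= value_bound a mu n j b.
Proof.
  intros Ha Hmu Hj. unfold value_bound.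
  assert (0 < INR j) by (apply lt_0_INR; lia). pose proof (pos_INR b).
  pose proof (harm_tail_nonneg j n). pose proof (harm_tail_nonneg 0 n). fold (harm n) in *.
  apply Rmult_le_pos; [left; apply Rinv_0_lt_compat; nra|].
  repeat apply Rplus_le_le_0_compat; repeat apply Rdiv_nonneg; repeat apply Rmult_le_pos; nra.
Qed.

Lemma value_bound_mono a mu n j b : 0 < a -> 0 <= mu -> (1 <= j)%nat ->
  value_bound a mu n j b <= value_bound a mu n j (S b).
Proof.
  intros Ha Hmu Hj. unfold value_bound. rewrite S_INR.
  assert (0 < INR j) by (apply lt_0_INR; lia). pose proof (pos_INR b).
  pose proof (harm_tail_nonneg j n).
  apply Rmult_le_compat_l; [left; apply Rinv_0_lt_compat; nra|].
  unfold Rdiv. do 2 apply Rplus_le_compat_r.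
  assert (0 < / (INR j * (INR j + 1))) by (apply Rinv_0_lt_compat; nra).
  assert (0 < / INR j) by (apply Rinv_0_lt_compat; nra).
  apply Rplus_le_compat; apply Rmult_le_compat_r; nra.
Qed.

Lemma supersolution_ineq s mu H h J B : 0 < s -> 0 <= mu -> 1 <= J -> 0 <= B -> 0 <= h <= H ->
  let P := fun x => s * (x * (x + 1) / ((J + 1) * (J + 1 + 1)) + 8 * mu * h * x / (J + 1)
                         + 12 * mu / (J + 1 + 1) + 32 * mu ^ 2 * H * h) in
  P B + B / J * (P (B + 1) - P B) + 2 * mu * (P (B + 1 + 1) - P B) <=
  s * (B * (B + 1) / (J * (J + 1)) + 8 * mu * (/ (J + 1) + h) * B / J + 12 * mu / (J + 1)
       + 32 * mu ^ 2 * H * (/ (J + 1) + h)).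
Proof.
  intros Hs Hmu HJ HB Hh P. unfold P.
  match goal with |- ?L <= ?R => assert (E : R - L = s * (8 * mu * B / (J * (J + 1))
    - 8 * mu * B / ((J + 1) * (J + 2)) + 32 * mu ^ 2 * (H - h) / (J + 1))) by (field; lra) end.
  assert (/ ((J + 1) * (J + 2)) <= / (J * (J + 1))) by (apply Rinv_le_contravar; nra).
  assert (0 <= 8 * mu * B / (J * (J + 1)) - 8 * mu * B / ((J + 1) * (J + 2))).
  { unfold Rdiv. rewrite <- Rmult_minus_distr_l. apply Rmult_le_pos; nra. }
  assert (0 <= 32 * mu ^ 2 * (H - h) / (J + 1)) by (apply Rdiv_nonneg; nra).
  assert (0 <= s * (8 * mu * B / (J * (J + 1)) - 8 * mu * B / ((J + 1) * (J + 2))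
                    + 32 * mu ^ 2 * (H - h) / (J + 1))) by (apply Rmult_le_pos; lra).
  lra.
Qed.

Lemma value_bound_super a mu n j b : 0 < a -> 0 <= mu -> (1 <= j < n)%nat ->
  let g := value_bound a mu n (S j) in
  g b + INR b / INR j * (g (S b) - g b) + 2 * mu * (g (S (S b)) - g b) <= value_bound a mu n j b.
Proof.
  intros Ha Hmu Hj g. unfold g, value_bound. rewrite (harm_tail_step j n) by lia. rewrite !S_INR.
  assert (1 <= INR j) by (apply (le_INR 1); lia).
  pose proof (harm_tail_nonneg (S j) n). pose proof (harm_tail_le_harm (S j) n).
  apply supersolution_ineq; try lra; [apply Rinv_0_lt_compat; nra | apply pos_INR].
Qed.

Lemma in_window_bounds a n b : 0 <= in_window a n b <= 1.
Proof. unfold in_window, dirac_open. destruct (Rlt_dec _ _); [destruct (Rlt_dec _ _)|]; lra. Qed.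

Lemma in_window_0 a n : 0 < a -> in_window a n 0%nat = 0.
Proof.
  intros Ha. unfold in_window, dirac_open. simpl INR. unfold Rdiv. rewrite Rmult_0_l.
  destruct (Rlt_dec a 0); [lra | reflexivity].
Qed.

Lemma in_window_le_value_bound a mu n b : 0 < a < 1 -> (1 <= n)%nat -> 0 <= mu ->
  in_window a n b <= value_bound a mu n n b.
Proof.
  intros Ha Hn Hmu. pose proof (value_bound_nonneg a mu n n b (proj1 Ha) Hmu Hn).
  unfold in_window, dirac_open. destruct (Rlt_dec a (INR b / INR n)) as [Hlt|]; [|lra].
  destruct (Rlt_dec _ 1); [|lra].
  unfold value_bound. rewrite (harm_tail_nil n n) by lia.
  assert (0 < INR n) by (apply lt_0_INR; lia). pose proof (pos_INR b).
  assert (HB : a * INR n < INR b).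
  { apply Rmult_lt_reg_r with (/ INR n); [apply Rinv_0_lt_compat; lra|].
    rewrite Rmult_assoc, Rinv_r by lra. lra. }
  assert (HB2 : a ^ 2 * (INR n * (INR n + 1)) <= INR b * (INR b + 1)).
  { replace (a ^ 2 * (INR n * (INR n + 1))) with ((a * INR n) * (a * (INR n + 1))) by ring.
    apply Rmult_le_compat; nra. }
  assert (1 <= / a ^ 2 * (INR b * (INR b + 1) / (INR n * (INR n + 1)))).
  { apply Rmult_le_reg_l with (a ^ 2); [nra|].
    rewrite <- Rmult_assoc, Rinv_r, Rmult_1_l, Rmult_1_r by nra.
    apply Rmult_le_reg_r with (INR n * (INR n + 1)); [nra|].
    unfold Rdiv. rewrite Rmult_assoc, Rinv_l by nra. lra. }
  assert (0 <= 12 * mu / (INR n + 1)) by (apply Rdiv_nonneg; lra).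
  assert (0 < / a ^ 2) by (apply Rinv_0_lt_compat; nra).
  replace (8 * mu * 0 * INR b / INR n) with 0 by (unfold Rdiv; ring).
  nra.
Qed.

Lemma evolve_to_le_value_bound a mu n j b : 0 < a < 1 -> 0 <= mu <= 1 -> (1 <= j <= n)%nat ->
  evolve_to mu j n (in_window a n) b <= value_bound a mu n j b.
Proof.
  intros Ha Hmu. remember (n - j)%nat as d eqn:Hd. revert j b Hd.
  induction d as [|d IH]; intros j b Hd Hj.
  - replace j with n by lia. rewrite evolve_to_self. apply in_window_le_value_bound; lra || lia.
  - rewrite evolve_to_step by lia.
    eapply Rle_trans; [apply div_step_mono; [lra | lia | intros x; apply (IH (S j)); lia]|].
    eapply Rle_trans; [apply div_step_upper; [lra | lia | intros x; apply value_bound_mono; lra || lia]|].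
    apply value_bound_super; lra || lia.
Qed.

Section LevelSums.
Variables (a mu : R) (n : nat).
Hypothesis Ha : 0 < a < 1.
Hypothesis Hmu : 0 <= mu <= 1.
Hypothesis Hn : (1 <= n)%nat.

Lemma evolve_to_window_nonneg j b : (1 <= j)%nat -> 0 <= evolve_to mu j n (in_window a n) b.
Proof.
  intros Hj. unfold evolve_to. rewrite <- (evolve_const mu (n - j) j 0 b).
  apply evolve_mono; auto. intros; apply in_window_bounds.
Qed.

Lemma evolve_to_window_le j b : (1 <= j <= n)%nat ->
  evolve_to mu j n (in_window a n) b <= / a ^ 2 * (INR b * (INR b + 1) * / (INR j * (INR j + 1))
    + (8 * mu * harm n * INR b + 12 * mu) * / INR j + 32 * mu ^ 2 * harm n ^ 2).
Proof.
  intros Hj. eapply Rle_trans; [apply evolve_to_le_value_bound; auto|]. unfold value_bound.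
  assert (0 < INR j) by (apply lt_0_INR; lia). pose proof (pos_INR b).
  pose proof (harm_tail_le_harm j n). pose proof (harm_tail_nonneg j n).
  assert (/ (INR j + 1) <= / INR j) by (apply Rinv_le_contravar; lra).
  assert (0 < / INR j) by (apply Rinv_0_lt_compat; lra).
  apply Rmult_le_compat_l; [left; apply Rinv_0_lt_compat; nra|]. unfold Rdiv.
  assert (8 * mu * harm_tail j n * INR b * / INR j <= 8 * mu * harm n * INR b * / INR j).
  { repeat apply Rmult_le_compat_r; try lra. apply Rmult_le_compat_l; lra. }
  assert (12 * mu * / (INR j + 1) <= 12 * mu * / INR j) by (apply Rmult_le_compat_l; lra).
  assert (32 * mu ^ 2 * harm n * harm_tail j n <= 32 * mu ^ 2 * harm n ^ 2).
  { assert (0 <= 32 * mu ^ 2 * harm n) by (pose proof (harm_tail_nonneg 0 n); unfold harm; nra).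
    replace (32 * mu ^ 2 * harm n ^ 2) with (32 * mu ^ 2 * harm n * harm n) by ring.
    apply Rmult_le_compat_l; assumption. }
  lra.
Qed.

Lemma rsum_evolve_to_window_le s len b : (1 <= s)%nat -> (s + len <= S n)%nat ->
  rsum (seq s len) (fun l => evolve_to mu l n (in_window a n) b) <=
  / a ^ 2 * (INR b * (INR b + 1) / INR s + (8 * mu * harm n * INR b + 12 * mu) * harm n
             + 32 * INR n * mu ^ 2 * harm n ^ 2).
Proof.
  intros Hs Hl.
  eapply Rle_trans; [apply rsum_le; intros l Hl'; apply in_seq in Hl'; apply evolve_to_window_le; lia|].
  rewrite rsum_scal. apply Rmult_le_compat_l; [left; apply Rinv_0_lt_compat; nra|].
  rewrite !rsum_plus, !rsum_scal, rsum_const, length_seq, rsum_inv_consecutive by exact Hs.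
  pose proof (rsum_inv_le_harm s len n Hs Hl). pose proof (harm_ge_1 n Hn).
  set (h := harm n) in *.
  assert (0 < INR s) by (apply lt_0_INR; lia).
  assert (0 < / INR (s + len)) by (apply Rinv_0_lt_compat, lt_0_INR; lia).
  assert (INR len <= INR n) by (apply le_INR; lia). pose proof (pos_INR b).
  assert (0 <= 32 * mu ^ 2 * h ^ 2) by nra.
  assert (0 <= 8 * mu * h * INR b + 12 * mu) by (assert (0 <= mu * h) by nra; nra).
  assert (INR b * (INR b + 1) * (/ INR s - / INR (s + len)) <= INR b * (INR b + 1) / INR s).
  { unfold Rdiv. apply Rmult_le_compat_l; nra. }
  assert ((8 * mu * h * INR b + 12 * mu) * rsum (seq s len) (fun l => / INR l)
          <= (8 * mu * h * INR b + 12 * mu) * h) by (apply Rmult_le_compat_l; auto).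
  assert (32 * mu ^ 2 * (INR len * h ^ 2) <= 32 * INR n * mu ^ 2 * h ^ 2).
  { replace (32 * INR n * mu ^ 2 * h ^ 2) with (INR n * (32 * mu ^ 2 * h ^ 2)) by ring.
    replace (32 * mu ^ 2 * (INR len * h ^ 2)) with (INR len * (32 * mu ^ 2 * h ^ 2)) by ring.
    apply Rmult_le_compat_r; assumption. }
  lra.
Qed.

End LevelSums.

(** * Pólya's urn *)

Definition ind_ge (c b : nat) : R := if Nat.leb c b then 1 else 0.

Fixpoint falling (m : nat) (x : R) : R :=
  match m with O => 1 | S m' => falling m' x * (x - INR m') end.

Lemma falling_zero m p : (p < m)%nat -> falling m (INR p) = 0.
Proof.
  induction m as [|m IH]; intros H; [lia|]. simpl. destruct (Nat.eq_dec p m) as [->|].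
  - rewrite Rminus_diag. ring.
  - rewrite IH by lia. ring.
Qed.

Lemma falling_pos m x : INR m - 1 < x -> 0 < falling m x.
Proof.
  induction m as [|m IH]; intros H; simpl; [lra|]. rewrite S_INR in H.
  pose proof (pos_INR m). apply Rmult_lt_0_compat; [apply IH|]; lra.
Qed.

Lemma falling_shift m y : falling (S m) (y + 1) = (y + 1) * falling m y.
Proof.
  induction m as [|m IH]; [simpl; ring|].
  change (falling (S m) (y + 1) * (y + 1 - INR (S m)) = (y + 1) * (falling m y * (y - INR m))).
  rewrite IH, S_INR. ring.
Qed.

Lemma falling_ratio_step m x N : 0 < falling m N -> INR m < N ->
  (1 - (N - x) / (N + 1)) * (falling (S m) x / falling (S m) N)
  + (N - x) / (N + 1) * (falling (S m) (x + 1) / falling (S m) N)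
  = falling (S m) (x + 1) / falling (S m) (N + 1).
Proof.
  intros Hpos HmN. pose proof (pos_INR m).
  rewrite !falling_shift. cbn [falling]. field. repeat split; lra.
Qed.

Lemma div_step0_ind_ge k c b : (1 <= k)%nat -> (1 <= c)%nat -> (c - 1 <= k)%nat ->
  div_step 0 k (ind_ge c) b = (1 - INR (c - 1) / INR k) * ind_ge c b + INR (c - 1) / INR k * ind_ge (c - 1) b.
Proof.
  intros Hk Hc Hck. unfold div_step, mutant_div, wild_div, keep_prob.
  replace (1 - (1 - 0 / 3)) with 0 by (unfold Rdiv; ring).
  replace (1 - 0 / 3) with 1 by (unfold Rdiv; ring).
  unfold ind_ge. destruct (Nat.leb c b) eqn:E1; destruct (Nat.leb (c - 1) b) eqn:E2;
    destruct (Nat.leb c (S b)) eqn:E3;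
    apply Nat.leb_le in E1 || apply Nat.leb_gt in E1;
    apply Nat.leb_le in E2 || apply Nat.leb_gt in E2;
    apply Nat.leb_le in E3 || apply Nat.leb_gt in E3; try lia; try ring.
  assert (b = c - 1)%nat by lia. subst b. unfold mutant_frac. rewrite Nat.min_l by lia. ring.
Qed.

(* For [mu = 0] the chain is Pólya's urn, started here from one mutant among [j] cells. *)
Lemma evolve0_ind_ge j r : (2 <= j)%nat -> forall c, (1 <= c <= j + r)%nat ->
  evolve 0 j r (ind_ge c) 1%nat = falling (j - 1) (INR (j + r - c)) / falling (j - 1) (INR (j + r - 1)).
Proof.
  intros Hj. induction r as [|r IH]; intros c Hc.
  - simpl. assert (0 < falling (j - 1) (INR (j + 0 - 1))).
    { apply falling_pos. replace (j + 0 - 1)%nat with (j - 1)%nat by lia. lra. }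
    unfold ind_ge. destruct (Nat.eq_dec c 1) as [->|].
    + simpl. field. lra.
    + rewrite falling_zero by lia. replace (Nat.leb c 1) with false by (symmetry; apply Nat.leb_gt; lia).
      unfold Rdiv; ring.
  - assert (Hpos : forall y, (j - 1 <= y)%nat -> 0 < falling (j - 1) (INR y)).
    { intros y Hy. apply falling_pos. apply le_INR in Hy. lra. }
    rewrite evolve_last. set (k := (j + r)%nat).
    rewrite (evolve_ext 0 r j _ (fun b => (1 - INR (c - 1) / INR k) * ind_ge c b
      + INR (c - 1) / INR k * ind_ge (c - 1) b)) by (intros; apply div_step0_ind_ge; unfold k; lia).
    rewrite evolve_lin.
    destruct (Nat.eq_dec c (S k)) as [Hck|Hck]; [|destruct (Nat.eq_dec c 1) as [->|Hc1]].
    + replace (c - 1)%nat with k by lia.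
      replace (INR k / INR k) with 1 by (field; apply not_0_INR; unfold k; lia).
      rewrite (IH k) by (unfold k; lia).
      replace (j + S r - c)%nat with 0%nat by (unfold k in Hck; lia).
      replace (j + r - k)%nat with 0%nat by (unfold k; lia).
      rewrite (falling_zero (j - 1) 0) by lia. unfold Rdiv. ring.
    + rewrite IH by lia.
      assert (0 < falling (j - 1) (INR (j + r - 1))) by (apply Hpos; lia).
      assert (0 < falling (j - 1) (INR (j + S r - 1))) by (apply Hpos; lia).
      assert (0 < INR k) by (apply lt_0_INR; unfold k; lia).
      simpl (INR (1 - 1)). field. lra.
    + rewrite !IH by lia.
      replace (j - 1)%nat with (S (j - 2)) by lia.
      replace (INR (j + r - (c - 1))) with (INR (j + r - c) + 1) by (rewrite <- S_INR; f_equal; lia).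
      replace (INR (j + S r - c)) with (INR (j + r - c) + 1) by (rewrite <- S_INR; f_equal; lia).
      replace (INR (j + S r - 1)) with (INR (j + r - 1) + 1) by (rewrite <- S_INR; f_equal; lia).
      replace (INR (c - 1)) with (INR (j + r - 1) - INR (j + r - c)) by (rewrite !minus_INR by lia; simpl; lra).
      replace (INR k) with (INR (j + r - 1) + 1) by (rewrite <- S_INR; f_equal; unfold k; lia).
      apply falling_ratio_step.
      * apply falling_pos. assert (INR (j - 2) < INR (j + r - 1)) by (apply lt_INR; lia). lra.
      * apply lt_INR. lia.
Qed.

Definition nat_up (t : R) : nat := Z.to_nat (up t).

Lemma nat_up_spec t : 0 <= t -> t < INR (nat_up t) <= t + 1.
Proof.
  intros Ht. unfold nat_up. destruct (archimed t) as [H1 H2].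
  assert (Hz : (0 <= up t)%Z) by (apply le_IZR; lra).
  rewrite INR_IZR_INZ, Z2Nat.id by exact Hz. lra.
Qed.

Definition threshold (x : R) (n : nat) : nat := nat_up (x * INR n).

Lemma threshold_spec x n : 0 <= x -> x * INR n < INR (threshold x n) <= x * INR n + 1.
Proof. intros Hx. apply nat_up_spec, Rmult_le_pos; [exact Hx | apply pos_INR]. Qed.

Lemma threshold_le x n : 0 <= x < 1 -> 1 / (1 - x) <= INR n -> (threshold x n <= n)%nat.
Proof.
  intros Hx Hn. apply INR_le. destruct (threshold_spec x n (proj1 Hx)).
  assert (1 <= (1 - x) * INR n); [|lra].
  apply Rmult_le_compat_l with (r := 1 - x) in Hn; [|lra].
  replace ((1 - x) * (1 / (1 - x))) with 1 in Hn by (field; lra). exact Hn.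
Qed.

Lemma ratio_cv x l : 0 <= x < 1 -> 0 <= l ->
  Un_cv (fun n => (INR (n - threshold x n) - l) / (INR (n - 1) - l)) (1 - x).
Proof.
  intros Hx Hl. destruct (INR_unbounded (l + 1 + 1 / (1 - x))) as [N0 HN0].
  apply (Un_cv_of_rate _ _ (3 + l) (1 + l) N0); [lra|]. intros n Hn.
  assert (INR N0 <= INR n) by (apply le_INR; exact Hn).
  assert (0 <= 1 / (1 - x)) by (apply Rdiv_nonneg; lra).
  split; [lra|].
  destruct (threshold_spec x n (proj1 Hx)) as [Hc1 Hc2].
  assert (Hcn : (threshold x n <= n)%nat) by (apply threshold_le; lra).
  assert (1 <= n)%nat by (apply INR_le; simpl; lra).
  rewrite !minus_INR by lia. simpl INR.
  replace ((INR n - INR (threshold x n) - l) / (INR n - 1 - l) - (1 - x))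
    with ((x * INR n - INR (threshold x n) + 1 - x * (1 + l)) / (INR n - (1 + l))) by (field; lra).
  unfold Rdiv. rewrite Rabs_mult, (Rabs_right (/ (INR n - (1 + l)))) by (left; apply Rinv_0_lt_compat; lra).
  apply Rmult_le_compat_r; [left; apply Rinv_0_lt_compat; lra|].
  rewrite Rabs_le_iff. split; nra.
Qed.

Lemma falling_ratio_cv x m : 0 <= x < 1 ->
  Un_cv (fun n => falling m (INR (n - threshold x n)) / falling m (INR (n - 1))) ((1 - x) ^ m).
Proof.
  intros Hx. induction m as [|m IH].
  - apply Un_cv_eventually with (N0 := 0%nat) (v := fun _ => 1); [|apply Un_cv_const].
    intros; simpl; field.
  - apply Un_cv_eventually with (N0 := (m + 2)%nat) (v := fun n =>
      falling m (INR (n - threshold x n)) / falling m (INR (n - 1))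
      * ((INR (n - threshold x n) - INR m) / (INR (n - 1) - INR m))).
    + intros n Hn. assert (INR m + 1 <= INR (n - 1)) by (rewrite <- S_INR; apply le_INR; lia).
      assert (0 < falling m (INR (n - 1))) by (apply falling_pos; lra).
      simpl falling. field. lra.
    + simpl. rewrite Rmult_comm. apply CV_mult; [exact IH | apply ratio_cv; auto; apply pos_INR].
Qed.

Lemma polya_tail_cv x j : 0 <= x < 1 -> (2 <= j)%nat ->
  Un_cv (fun n => evolve_to 0 j n (ind_ge (threshold x n)) 1%nat) ((1 - x) ^ (j - 1)).
Proof.
  intros Hx Hj. destruct (INR_unbounded (INR j + 1 / (1 - x))) as [N0 HN0].
  apply Un_cv_eventually with (N0 := N0)
    (v := fun n => falling (j - 1) (INR (n - threshold x n)) / falling (j - 1) (INR (n - 1)));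
    [|apply falling_ratio_cv; exact Hx].
  intros n Hn. unfold evolve_to.
  assert (INR N0 <= INR n) by (apply le_INR; exact Hn).
  assert (0 <= 1 / (1 - x)) by (apply Rdiv_nonneg; lra).
  assert (Hjn : (j <= n)%nat) by (apply INR_le; lra).
  assert (Hcn : (threshold x n <= n)%nat) by (apply threshold_le; pose proof (pos_INR j); lra).
  destruct (threshold_spec x n (proj1 Hx)) as [Hc1 _].
  assert (Hc0 : (1 <= threshold x n)%nat).
  { assert (0 <= x * INR n) by (apply Rmult_le_pos; [lra | apply pos_INR]).
    destruct (threshold x n); [simpl in Hc1; lra | lia]. }
  rewrite evolve0_ind_ge by lia. replace (j + (n - j))%nat with n by lia. reflexivity.
Qed.

(** * Comparison with the mutation-free chain *)

Definition lipschitz (g : nat -> R) (L : R) : Prop := forall b, Rabs (g (S b) - g b) <= L.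

Lemma lipschitz_nonneg g L : lipschitz g L -> 0 <= L.
Proof. intros H. specialize (H 0%nat). pose proof (Rabs_pos (g 1%nat - g 0%nat)). lra. Qed.

Lemma lipschitz_pred g L b : lipschitz g L -> Rabs (g b - g (b - 1)%nat) <= L.
Proof.
  intros H. destruct b as [|b].
  - simpl. rewrite Rminus_diag, Rabs_R0. eapply lipschitz_nonneg; eauto.
  - replace (S b - 1)%nat with b by lia. apply H.
Qed.

Lemma mutant_div_lipschitz mu g L b : 0 <= mu <= 1 -> lipschitz g L ->
  Rabs (mutant_div mu g (S b) - mutant_div mu g b) <= L.
Proof.
  intros Hmu H. pose proof (keep_prob_bounds mu Hmu). unfold mutant_div.
  set (q := keep_prob mu) in *. replace (S b - 1)%nat with b by lia.
  match goal with |- Rabs ?e <= _ => replace e with ((1 - q) ^ 2 * (g b - g (b - 1)%nat)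
    + 2 * q * (1 - q) * (g (S b) - g b) + q ^ 2 * (g (S (S b)) - g (S b))) by ring end.
  apply Rle_trans with (((1 - q) ^ 2 + 2 * q * (1 - q) + q ^ 2) * L); [|right; ring].
  apply Rabs_comb3; try nra; auto. apply lipschitz_pred; auto.
Qed.

Lemma wild_div_lipschitz mu g L b : 0 <= mu <= 1 -> lipschitz g L ->
  Rabs (wild_div mu g (S b) - wild_div mu g b) <= L.
Proof.
  intros Hmu H. unfold wild_div.
  match goal with |- Rabs ?e <= _ => replace e with ((1 - mu) ^ 2 * (g (S b) - g b)
    + 2 * mu * (1 - mu) * (g (S (S b)) - g (S b)) + mu ^ 2 * (g (S (S (S b))) - g (S (S b))))
    by ring end.
  apply Rle_trans with (((1 - mu) ^ 2 + 2 * mu * (1 - mu) + mu ^ 2) * L); [|right; ring].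
  apply Rabs_comb3; try nra; auto.
Qed.

Lemma mutant_div_near mu g L b : 0 <= mu <= 1 -> lipschitz g L ->
  Rabs (mutant_div mu g (S b) - g (S b)) <= L.
Proof.
  intros Hmu H. pose proof (keep_prob_bounds mu Hmu). pose proof (lipschitz_nonneg g L H).
  unfold mutant_div. set (q := keep_prob mu) in *. replace (S b - 1)%nat with b by lia.
  match goal with |- Rabs ?e <= _ => replace e with
    ((1 - q) ^ 2 * (- (g (S b) - g b)) + q ^ 2 * (g (S (S b)) - g (S b))) by ring end.
  eapply Rle_trans; [apply Rabs_comb2; [nra | nra | rewrite Rabs_Ropp; apply H | apply H]|].
  assert (0 <= 2 * q * (1 - q) * L) by (repeat apply Rmult_le_pos; lra). nra.
Qed.

Lemma wild_div_near mu g L b : 0 <= mu <= 1 -> lipschitz g L ->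
  Rabs (wild_div mu g b - g (S b)) <= L.
Proof.
  intros Hmu H. pose proof (lipschitz_nonneg g L H). unfold wild_div.
  match goal with |- Rabs ?e <= _ => replace e with
    ((1 - mu) ^ 2 * (- (g (S b) - g b)) + mu ^ 2 * (g (S (S b)) - g (S b))) by ring end.
  eapply Rle_trans; [apply Rabs_comb2; [nra | nra | rewrite Rabs_Ropp; apply H | apply H]|].
  assert (0 <= 2 * mu * (1 - mu) * L) by (repeat apply Rmult_le_pos; lra). nra.
Qed.

Lemma div_step_lipschitz mu k g L : 0 <= mu <= 1 -> (1 <= k)%nat -> lipschitz g L ->
  lipschitz (div_step mu k g) ((1 + / INR k) * L).
Proof.
  intros Hmu Hk H b. unfold div_step.
  pose proof (mutant_frac_bounds k b Hk). pose proof (mutant_frac_bounds k (S b) Hk).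
  pose proof (mutant_frac_step k b Hk).
  pose proof (mutant_div_lipschitz mu g L b Hmu H). pose proof (wild_div_lipschitz mu g L b Hmu H).
  pose proof (mutant_div_near mu g L b Hmu H). pose proof (wild_div_near mu g L b Hmu H).
  pose proof (lipschitz_nonneg g L H). assert (0 < INR k) by (apply lt_0_INR; lia).
  set (w := mutant_frac k b) in *. set (w' := mutant_frac k (S b)) in *.
  set (M0 := mutant_div mu g b) in *. set (M1 := mutant_div mu g (S b)) in *.
  set (N0 := wild_div mu g b) in *. set (N1 := wild_div mu g (S b)) in *.
  replace (w' * M1 + (1 - w') * N1 - (w * M0 + (1 - w) * N0))
    with (w * (M1 - M0) + (1 - w') * (N1 - N0) + (w' - w) * ((M1 - g (S b)) - (N0 - g (S b)))) by ring.
  rewrite Rabs_le_iff in *. set (ik := / INR k) in *. split; nra.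
Qed.

Lemma evolve_to_lipschitz mu n g L j : 0 <= mu <= 1 -> lipschitz g L -> (1 <= j <= n)%nat ->
  lipschitz (evolve_to mu j n g) (INR n / INR j * L).
Proof.
  intros Hmu HL. remember (n - j)%nat as d eqn:Hd. revert j Hd.
  induction d as [|d IH]; intros j Hd Hj.
  - replace j with n by lia. intros b. rewrite !evolve_to_self.
    assert (0 < INR n) by (apply lt_0_INR; lia).
    replace (INR n / INR n * L) with L by (field; lra). apply HL.
  - intros b. rewrite !evolve_to_step by lia.
    replace (INR n / INR j * L) with ((1 + / INR j) * (INR n / INR (S j) * L)).
    + apply div_step_lipschitz; [exact Hmu | lia | apply IH; lia].
    + rewrite S_INR. assert (0 < INR j) by (apply lt_0_INR; lia). field. lra.
Qed.

Lemma div_step_mu_close mu k h L b : 0 <= mu <= 1 -> (1 <= k)%nat -> lipschitz h L ->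
  Rabs (div_step mu k h b - div_step 0 k h b) <= 2 * mu * L.
Proof.
  intros Hmu Hk H. pose proof (keep_prob_bounds mu Hmu). pose proof (mutant_frac_bounds k b Hk).
  pose proof (lipschitz_nonneg h L H).
  pose proof (lipschitz_pred h L b H) as Hpred. pose proof (H b) as Hb. pose proof (H (S b)) as HSb.
  rewrite Rabs_minus_sym in Hb.
  assert (Hpred2 : Rabs (h (b - 1)%nat - h (S b)) <= 2 * L).
  { rewrite Rabs_le_iff in *. lra. }
  assert (Hnext2 : Rabs (h (S (S b)) - h b) <= 2 * L).
  { rewrite Rabs_le_iff in *. lra. }
  assert (HM : Rabs (mutant_div mu h b - h (S b)) <= 2 * mu * L).
  { unfold mutant_div. set (q := keep_prob mu) in *.
    assert (Hq : 1 - q = mu / 3) by (unfold q, keep_prob; lra).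
    match goal with |- Rabs ?e <= _ => replace e with
      ((1 - q) ^ 2 * (h (b - 1)%nat - h (S b)) + 2 * q * (1 - q) * (h b - h (S b))) by ring end.
    eapply Rle_trans; [apply Rabs_comb2; [nra | nra | apply Hpred2 | apply Hb]|].
    rewrite Hq. nra. }
  assert (HN : Rabs (wild_div mu h b - h b) <= 2 * mu * L).
  { unfold wild_div.
    match goal with |- Rabs ?e <= _ => replace e with
      (2 * mu * (1 - mu) * (h (S b) - h b) + mu ^ 2 * (h (S (S b)) - h b)) by ring end.
    rewrite Rabs_minus_sym in Hb.
    eapply Rle_trans; [apply Rabs_comb2; [nra | nra | apply Hb | apply Hnext2]|]. nra. }
  unfold div_step.
  replace (mutant_div 0 h b) with (h (S b)) by (unfold mutant_div, keep_prob; simpl; field).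
  replace (wild_div 0 h b) with (h b) by (unfold wild_div; ring).
  set (w := mutant_frac k b) in *.
  match goal with |- Rabs ?e <= _ => replace e with
    (w * (mutant_div mu h b - h (S b)) + (1 - w) * (wild_div mu h b - h b)) by ring end.
  eapply Rle_trans; [apply Rabs_comb2; [lra | lra | apply HM | apply HN]|]. nra.
Qed.

Lemma div_step_abs_le mu k h e b : 0 <= mu <= 1 -> (1 <= k)%nat -> (forall x, Rabs (h x) <= e) ->
  Rabs (div_step mu k h b) <= e.
Proof.
  intros Hmu Hk H. pose proof (keep_prob_bounds mu Hmu). pose proof (mutant_frac_bounds k b Hk).
  assert (HM : Rabs (mutant_div mu h b) <= e).
  { unfold mutant_div. eapply Rle_trans; [apply Rabs_comb3; auto; nra|]. right; ring. }
  assert (HN : Rabs (wild_div mu h b) <= e).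
  { unfold wild_div. eapply Rle_trans; [apply Rabs_comb3; auto; nra|]. right; ring. }
  unfold div_step. eapply Rle_trans; [apply Rabs_comb2; [lra | lra | apply HM | apply HN]|].
  right; ring.
Qed.

Lemma evolve_to_mu_close mu n g L j : 0 <= mu <= 1 -> lipschitz g L -> (1 <= j <= n)%nat ->
  forall b, Rabs (evolve_to mu j n g b - evolve_to 0 j n g b) <= 2 * mu * L * INR n * harm_tail j n.
Proof.
  intros Hmu HL. pose proof (lipschitz_nonneg g L HL).
  remember (n - j)%nat as d eqn:Hd. revert j Hd.
  induction d as [|d IH]; intros j Hd Hj b.
  - replace j with n by lia. rewrite !evolve_to_self, Rminus_diag, Rabs_R0, harm_tail_nil by lia. lra.
  - rewrite !evolve_to_step by lia.
    set (V1 := evolve_to mu (S j) n g). set (V0 := evolve_to 0 (S j) n g).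
    replace (div_step mu j V1 b - div_step 0 j V0 b) with
      ((div_step mu j V1 b - div_step 0 j V1 b) + div_step 0 j (fun x => 1 * V1 x + (-1) * V0 x) b)
      by (rewrite div_step_lin; ring).
    eapply Rle_trans; [apply Rabs_triang|].
    rewrite (harm_tail_step j n) by lia.
    assert (0 < INR (S j)) by (apply lt_0_INR; lia).
    assert (Rabs (div_step mu j V1 b - div_step 0 j V1 b) <= 2 * mu * (INR n / INR (S j) * L)).
    { apply div_step_mu_close; [exact Hmu | lia | apply evolve_to_lipschitz; auto; lia]. }
    assert (Rabs (div_step 0 j (fun x => 1 * V1 x + (-1) * V0 x) b)
            <= 2 * mu * L * INR n * harm_tail (S j) n).
    { apply div_step_abs_le; [lra | lia|]. intros x.
      replace (1 * V1 x + -1 * V0 x) with (V1 x - V0 x) by ring. apply IH; lia. }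
    replace (2 * mu * L * INR n * (/ INR (S j) + harm_tail (S j) n))
      with (2 * mu * (INR n / INR (S j) * L) + 2 * mu * L * INR n * harm_tail (S j) n) by (field; lra).
    lra.
Qed.

Definition clamp01 (t : R) : R := Rmax 0 (Rmin 1 t).

Lemma clamp01_bounds t : 0 <= clamp01 t <= 1.
Proof. unfold clamp01, Rmax, Rmin. repeat destruct (Rle_dec _ _); lra. Qed.

Lemma clamp01_lipschitz t s : Rabs (clamp01 t - clamp01 s) <= Rabs (t - s).
Proof.
  unfold Rabs at 2. destruct (Rcase_abs (t - s)); rewrite Rabs_le_iff;
    unfold clamp01, Rmax, Rmin; repeat destruct (Rle_dec _ _); lra.
Qed.

Lemma clamp01_of_le0 t : t <= 0 -> clamp01 t = 0.
Proof. intros. unfold clamp01, Rmax, Rmin. repeat destruct (Rle_dec _ _); lra. Qed.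

Lemma clamp01_of_ge1 t : 1 <= t -> clamp01 t = 1.
Proof. intros. unfold clamp01, Rmax, Rmin. repeat destruct (Rle_dec _ _); lra. Qed.

Lemma ind_ge_threshold x n b : 0 <= x ->
  (ind_ge (threshold x n) b = 1 /\ x * INR n < INR b) \/ (ind_ge (threshold x n) b = 0 /\ INR b <= x * INR n).
Proof.
  intros Hx. destruct (threshold_spec x n Hx) as [H1 H2]. unfold ind_ge.
  destruct (Nat.leb (threshold x n) b) eqn:E; [left | right]; split; auto.
  - apply Nat.leb_le, le_INR in E. lra.
  - apply Nat.leb_gt in E. assert (S b <= threshold x n)%nat as E' by lia.
    apply le_INR in E'. rewrite S_INR in E'. lra.
Qed.

Definition window_upper (a d : R) (n b : nat) : R := clamp01 ((INR b / INR n - a + d) / d).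

Definition window_lower (a d : R) (n b : nat) : R :=
  clamp01 (Rmin ((INR b / INR n - a) / d) ((1 - INR b / INR n) / d)).

Lemma window_upper_lipschitz a d n : 0 < d -> (1 <= n)%nat -> lipschitz (window_upper a d n) (/ (d * INR n)).
Proof.
  intros Hd Hn b. unfold window_upper. eapply Rle_trans; [apply clamp01_lipschitz|].
  assert (0 < INR n) by (apply lt_0_INR; lia). rewrite S_INR.
  replace ((((INR b + 1) / INR n - a + d) / d) - ((INR b / INR n - a + d) / d)) with (/ (d * INR n))
    by (field; lra).
  rewrite Rabs_right; [lra | left; apply Rinv_0_lt_compat; nra].
Qed.

Lemma window_lower_lipschitz a d n : 0 < d -> (1 <= n)%nat -> lipschitz (window_lower a d n) (/ (d * INR n)).
Proof.
  intros Hd Hn b. unfold window_lower. eapply Rle_trans; [apply clamp01_lipschitz|].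
  assert (0 < INR n) by (apply lt_0_INR; lia). rewrite S_INR.
  assert (0 < / (d * INR n)) by (apply Rinv_0_lt_compat; nra).
  apply Rmin_lipschitz.
  - replace (((INR b + 1) / INR n - a) / d - (INR b / INR n - a) / d) with (/ (d * INR n)) by (field; lra).
    rewrite Rabs_right; lra.
  - replace ((1 - (INR b + 1) / INR n) / d - (1 - INR b / INR n) / d) with (- / (d * INR n))
      by (field; lra).
    rewrite Rabs_Ropp, Rabs_right; lra.
Qed.

Lemma in_window_le_upper a d n b : 0 < d -> in_window a n b <= window_upper a d n b.
Proof.
  intros Hd. pose proof (clamp01_bounds ((INR b / INR n - a + d) / d)).
  unfold in_window, dirac_open, window_upper.
  destruct (Rlt_dec a (INR b / INR n)); [destruct (Rlt_dec _ 1)|]; try lra.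
  rewrite clamp01_of_ge1; [lra|]. apply Rdiv_ge1; lra.
Qed.

Lemma upper_le_ind_ge a d n b : 0 < d -> (1 <= n)%nat -> 0 <= a - d ->
  window_upper a d n b <= ind_ge (threshold (a - d) n) b.
Proof.
  intros Hd Hn Had. assert (0 < INR n) by (apply lt_0_INR; lia).
  destruct (ind_ge_threshold (a - d) n b Had) as [[-> _]|[-> Hb]]; [apply clamp01_bounds|].
  unfold window_upper. rewrite clamp01_of_le0; [lra|].
  assert (INR b / INR n <= a - d).
  { destruct (Rle_dec (INR b / INR n) (a - d)) as [|Hlt]; [assumption|].
    apply Rnot_le_lt, lt_div_INR in Hlt; [lra | assumption]. }
  apply Rdiv_nonpos; lra.
Qed.

Lemma lower_le_in_window a d n b : 0 < d -> window_lower a d n b <= in_window a n b.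
Proof.
  intros Hd. unfold in_window, dirac_open, window_lower.
  destruct (Rlt_dec a (INR b / INR n)); [destruct (Rlt_dec _ 1)|].
  - apply clamp01_bounds.
  - rewrite clamp01_of_le0; [lra|].
    assert ((1 - INR b / INR n) / d <= 0) by (apply Rdiv_nonpos; lra).
    eapply Rle_trans; [apply Rmin_r | assumption].
  - rewrite clamp01_of_le0; [lra|].
    assert ((INR b / INR n - a) / d <= 0) by (apply Rdiv_nonpos; lra).
    eapply Rle_trans; [apply Rmin_l | assumption].
Qed.

Lemma ind_ge_diff_le_lower a d n b : 0 < d -> (1 <= n)%nat -> 0 <= a + d -> 0 <= 1 - d ->
  ind_ge (threshold (a + d) n) b - ind_ge (threshold (1 - d) n) b <= window_lower a d n b.
Proof.
  intros Hd Hn Had H1d. assert (0 < INR n) by (apply lt_0_INR; lia).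
  pose proof (clamp01_bounds (Rmin ((INR b / INR n - a) / d) ((1 - INR b / INR n) / d))).
  unfold window_lower in *.
  destruct (ind_ge_threshold (a + d) n b Had) as [[-> H1]|[-> H1]];
  destruct (ind_ge_threshold (1 - d) n b H1d) as [[-> H2]|[-> H2]]; try lra.
  apply lt_div_INR in H1; [|assumption].
  assert (INR b / INR n <= 1 - d).
  { destruct (Rle_dec (INR b / INR n) (1 - d)) as [|Hlt]; [assumption|].
    apply Rnot_le_lt, lt_div_INR in Hlt; [lra | assumption]. }
  rewrite clamp01_of_ge1; [lra|].
  apply Rmin_glb; apply Rdiv_ge1; lra.
Qed.

Lemma evolve_to_mu_close_harm mu n j g d : 0 <= mu <= 1 -> 0 < d -> (1 <= j <= n)%nat ->
  lipschitz g (/ (d * INR n)) ->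
  forall b, Rabs (evolve_to mu j n g b - evolve_to 0 j n g b) <= 2 * mu * harm n / d.
Proof.
  intros Hmu Hd Hj HL b. eapply Rle_trans; [apply evolve_to_mu_close; eauto|].
  assert (0 < INR n) by (apply lt_0_INR; lia).
  replace (2 * mu * / (d * INR n) * INR n * harm_tail j n) with (2 * mu * harm_tail j n / d) by (field; lra).
  unfold Rdiv. apply Rmult_le_compat_r; [left; apply Rinv_0_lt_compat; lra|].
  apply Rmult_le_compat_l; [lra | apply harm_tail_le_harm].
Qed.

Lemma evolve_to_window_upper a mu d n j : 0 <= mu <= 1 -> 0 < d -> 0 <= a - d -> (1 <= j <= n)%nat ->
  evolve_to mu j n (in_window a n) 1%nat
  <= evolve_to 0 j n (ind_ge (threshold (a - d) n)) 1%nat + 2 * mu * harm n / d.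
Proof.
  intros Hmu Hd Had Hj.
  eapply Rle_trans; [apply evolve_to_mono; [exact Hmu | lia | intros b; apply (in_window_le_upper a d n b Hd)]|].
  pose proof (evolve_to_mu_close_harm mu n j (window_upper a d n) d Hmu Hd Hj
    (window_upper_lipschitz a d n Hd ltac:(lia)) 1%nat) as H.
  assert (evolve_to 0 j n (window_upper a d n) 1%nat <= evolve_to 0 j n (ind_ge (threshold (a - d) n)) 1%nat).
  { apply evolve_to_mono; [lra | lia|]. intros b. apply upper_le_ind_ge; auto; lia. }
  rewrite Rabs_le_iff in H. lra.
Qed.

Lemma evolve_to_window_lower a mu d n j : 0 < a < 1 -> 0 <= mu <= 1 -> 0 < d <= 1 -> (1 <= j <= n)%nat ->
  evolve_to 0 j n (ind_ge (threshold (a + d) n)) 1%nat - evolve_to 0 j n (ind_ge (threshold (1 - d) n)) 1%nat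
  - 2 * mu * harm n / d <= evolve_to mu j n (in_window a n) 1%nat.
Proof.
  intros Ha Hmu Hd Hj.
  eapply Rle_trans; [|apply evolve_to_mono; [exact Hmu | lia | intros b; apply (lower_le_in_window a d n b); lra]].
  pose proof (evolve_to_mu_close_harm mu n j (window_lower a d n) d Hmu ltac:(lra) Hj
    (window_lower_lipschitz a d n ltac:(lra) ltac:(lia)) 1%nat) as H.
  assert (evolve_to 0 j n (fun b => 1 * ind_ge (threshold (a + d) n) b + (-1) * ind_ge (threshold (1 - d) n) b) 1%nat
          <= evolve_to 0 j n (window_lower a d n) 1%nat).
  { apply evolve_to_mono; [lra | lia|]. intros b.
    pose proof (ind_ge_diff_le_lower a d n b ltac:(lra) ltac:(lia) ltac:(lra) ltac:(lra)). lra. }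
  unfold evolve_to in *. rewrite evolve_lin in *. rewrite Rabs_le_iff in H. lra.
Qed.

(** * First-order asymptotics of the window probability *)

Definition polya_close (d : R) (n l : nat) (x : R) : Prop :=
  Rabs (evolve_to 0 l n (ind_ge (threshold x n)) 1%nat - (1 - x) ^ (l - 1)) < d.

Lemma evolve_to_window_close a mu d n l : 0 < a < 1 -> 0 <= mu <= 1 ->
  0 < d -> d <= a / 2 -> d <= (1 - a) / 2 -> (2 <= l <= n)%nat ->
  polya_close d n l (a - d) -> polya_close d n l (a + d) -> polya_close d n l (1 - d) ->
  Rabs (evolve_to mu l n (in_window a n) 1%nat - (1 - a) ^ (l - 1)) <= INR l * d + 2 * d + 2 * mu * harm n / d.
Proof.
  intros Ha Hmu Hd Hd1 Hd2 Hl T1 T2 T3. unfold polya_close in *.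
  pose proof (evolve_to_window_upper a mu d n l Hmu Hd ltac:(lra) ltac:(lia)) as HU.
  pose proof (evolve_to_window_lower a mu d n l Ha Hmu ltac:(lra) ltac:(lia)) as HL.
  apply Rlt_le in T1, T2, T3. rewrite Rabs_le_iff in T1, T2, T3 |- *.
  set (m := (l - 1)%nat) in *.
  assert (INR l = INR m + 1) by (unfold m; rewrite minus_INR by lia; simpl; ring).
  pose proof (pow_increment_le (1 - a) d m ltac:(lra) ltac:(lra) ltac:(lra)).
  pose proof (pow_increment_le (1 - a - d) d m ltac:(lra) ltac:(lra) ltac:(lra)).
  replace (1 - a - d + d) with (1 - a) in * by ring.
  replace (1 - (a - d)) with (1 - a + d) in T1 by ring.
  replace (1 - (a + d)) with (1 - a - d) in T2 by ring.
  replace (1 - (1 - d)) with d in T3 by ring.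
  assert (d ^ m <= d).
  { assert (Hm1 : (1 <= m)%nat) by (unfold m; lia).
    destruct m as [|m']; [lia|]. simpl. pose proof (pow_unit_interval d m' ltac:(lra)). nra. }
  assert (0 <= d ^ m) by (apply pow_le; lra).
  assert (0 <= 2 * mu * harm n / d) by (apply Rdiv_nonneg; [pose proof (harm_tail_nonneg 0 n); unfold harm; nra | lra]).
  split; nra.
Qed.

Lemma combination_error p mu Z A W c : 0 <= mu <= 1 -> 0 <= Z -> 0 <= W -> 0 <= c ->
  p = (mu ^ 2 - 2 * mu) * Z + 2 * mu * (1 - mu) * A + mu ^ 2 * W ->
  Rabs (p - 2 * c * mu) <= mu * (2 * Z + 2 * Rabs (A - c) + 2 * mu * c + mu * W).
Proof.
  intros Hmu HZ HW Hc ->.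
  replace ((mu ^ 2 - 2 * mu) * Z + 2 * mu * (1 - mu) * A + mu ^ 2 * W - 2 * c * mu)
    with (mu * ((mu - 2) * Z + 2 * (1 - mu) * (A - c) - 2 * mu * c + mu * W)) by ring.
  rewrite Rabs_mult, (Rabs_right mu) by lra. apply Rmult_le_compat_l; [lra|].
  pose proof (Rle_abs (A - c)). pose proof (Rle_abs (- (A - c))). rewrite Rabs_Ropp in *.
  apply Rabs_le. nra.
Qed.

Definition err_scale (n : nat) (mu : R) : R := mu + mu * harm n ^ 2 + INR n * mu ^ 2 * harm n ^ 2.

Lemma err_scale_ge n mu : (1 <= n)%nat -> 0 <= mu ->
  mu <= err_scale n mu /\ mu * harm n <= err_scale n mu /\ mu * harm n ^ 2 <= err_scale n mu
  /\ INR n * mu ^ 2 * harm n ^ 2 <= err_scale n mu.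
Proof.
  intros Hn Hmu. pose proof (harm_ge_1 n Hn). pose proof (pos_INR n). unfold err_scale.
  assert (0 <= INR n * mu ^ 2 * harm n ^ 2) by (repeat apply Rmult_le_pos; nra).
  assert (mu * harm n <= mu * harm n ^ 2) by (apply Rmult_le_compat_l; nra).
  repeat split; nra.
Qed.

Section WindowProb.
Variable a : R.
Hypothesis Ha : 0 < a < 1.

Definition level_sum (n : nat) (mu : R) (b : nat) : R :=
  rsum (seq 2 (n - 1)) (fun l => evolve_to mu l n (in_window a n) b).

Lemma window_prob_decomp n mu : (2 <= n)%nat ->
  window_prob a n mu = (mu ^ 2 - 2 * mu) * level_sum n mu 0 + 2 * mu * (1 - mu) * level_sum n mu 1
                       + mu ^ 2 * level_sum n mu 2.
Proof.
  intros Hn. unfold window_prob. change (evolve mu 1 (n - 1)) with (evolve_to mu 1 n).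
  rewrite evolve_to_at_0 by lia. rewrite in_window_0 by lra.
  unfold level_change, level_sum. rewrite !rsum_plus, !rsum_scal. ring.
Qed.

Section Bounds.
Variables (n : nat) (mu : R).
Hypothesis Hmu : 0 <= mu <= 1.
Hypothesis Hn : (1 <= n)%nat.

Lemma level_sum_nonneg b : 0 <= level_sum n mu b.
Proof.
  apply rsum_nonneg. intros l Hl. apply in_seq in Hl. apply evolve_to_window_nonneg; lra || lia.
Qed.

Lemma level_sum_0_le : level_sum n mu 0 <= / a ^ 2 * (44 * err_scale n mu).
Proof.
  eapply Rle_trans; [apply rsum_evolve_to_window_le; lra || lia|].
  pose proof (err_scale_ge n mu Hn (proj1 Hmu)).
  apply Rmult_le_compat_l; [left; apply Rinv_0_lt_compat; nra|]. simpl INR.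
  replace (0 * (0 + 1) / (1 + 1)) with 0 by (unfold Rdiv; ring). lra.
Qed.

Lemma mu_level_sum_2_le : mu * level_sum n mu 2 <= / a ^ 2 * (63 * err_scale n mu).
Proof.
  pose proof (err_scale_ge n mu Hn (proj1 Hmu)) as (H1 & H2 & H3 & H4).
  pose proof (harm_ge_1 n Hn).
  eapply Rle_trans; [apply Rmult_le_compat_l; [lra | apply rsum_evolve_to_window_le; lra || lia]|].
  rewrite <- Rmult_assoc, (Rmult_comm mu), Rmult_assoc.
  apply Rmult_le_compat_l; [left; apply Rinv_0_lt_compat; nra|]. simpl INR.
  replace (mu * ((1 + 1) * (1 + 1 + 1) / (1 + 1) + (8 * mu * harm n * (1 + 1) + 12 * mu) * harm n
    + 32 * INR n * mu ^ 2 * harm n ^ 2))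
    with (3 * mu + 16 * mu * (mu * harm n ^ 2) + 12 * mu * (mu * harm n)
          + 32 * mu * (INR n * mu ^ 2 * harm n ^ 2)) by (field; lra).
  nra.
Qed.

Lemma level_tail_le J : (J < n)%nat ->
  rsum (seq (S J) (n - J)) (fun l => evolve_to mu l n (in_window a n) 1%nat)
  <= / a ^ 2 * (2 / (INR J + 1) + 52 * err_scale n mu).
Proof.
  intros HJ. pose proof (err_scale_ge n mu Hn (proj1 Hmu)) as (H1 & H2 & H3 & H4).
  eapply Rle_trans; [apply rsum_evolve_to_window_le; lra || lia|].
  apply Rmult_le_compat_l; [left; apply Rinv_0_lt_compat; nra|].
  change (INR 1) with 1. rewrite S_INR. assert (0 < INR J + 1) by (pose proof (pos_INR J); lra).
  replace (1 * (1 + 1) / (INR J + 1)) with (2 / (INR J + 1)) by (field; lra).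
  replace ((8 * mu * harm n * 1 + 12 * mu) * harm n) with (8 * (mu * harm n ^ 2) + 12 * (mu * harm n)) by ring.
  lra.
Qed.

Lemma level_head_close J d : (2 <= J < n)%nat -> 0 < d -> d <= a / 2 -> d <= (1 - a) / 2 ->
  (forall l, (2 <= l <= J)%nat ->
     polya_close d n l (a - d) /\ polya_close d n l (a + d) /\ polya_close d n l (1 - d)) ->
  Rabs (rsum (seq 2 (J - 1)) (fun l => evolve_to mu l n (in_window a n) 1%nat)
        - rsum (seq 2 (J - 1)) (fun l => (1 - a) ^ (l - 1)))
  <= INR J * ((INR J + 2) * d + 2 * err_scale n mu / d).
Proof.
  intros HJ Hd Hd1 Hd2 Hclose. pose proof (err_scale_ge n mu Hn (proj1 Hmu)) as (_ & H2 & _).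
  assert (0 <= 2 * err_scale n mu / d) by (apply Rdiv_nonneg; [pose proof (harm_ge_1 n Hn); nra | lra]).
  eapply Rle_trans; [apply (rsum_close _ _ _ ((INR J + 2) * d + 2 * err_scale n mu / d))|].
  - intros l Hl. apply in_seq in Hl. destruct (Hclose l ltac:(lia)) as (T1 & T2 & T3).
    eapply Rle_trans; [apply (evolve_to_window_close a mu d n l); auto; lia|].
    assert (INR l <= INR J) by (apply le_INR; lia).
    assert (2 * mu * harm n / d <= 2 * err_scale n mu / d).
    { unfold Rdiv. apply Rmult_le_compat_r; [left; apply Rinv_0_lt_compat; lra | lra]. }
    nra.
  - rewrite length_seq. pose proof (pos_INR J). apply Rmult_le_compat_r; [nra|].
    apply le_INR. lia.
Qed.

Lemma level_sum_1_close J d : (2 <= J < n)%nat -> 0 < d -> d <= a / 2 -> d <= (1 - a) / 2 ->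
  (forall l, (2 <= l <= J)%nat ->
     polya_close d n l (a - d) /\ polya_close d n l (a + d) /\ polya_close d n l (1 - d)) ->
  Rabs (level_sum n mu 1 - (/ a - 1))
  <= INR J * ((INR J + 2) * d + 2 * err_scale n mu / d)
     + / a ^ 2 * (2 / (INR J + 1) + 52 * err_scale n mu) + (1 - a) ^ J / a.
Proof.
  intros HJ Hd Hd1 Hd2 Hclose.
  assert (Hsplit : level_sum n mu 1 =
    rsum (seq 2 (J - 1)) (fun l => evolve_to mu l n (in_window a n) 1%nat)
    + rsum (seq (S J) (n - J)) (fun l => evolve_to mu l n (in_window a n) 1%nat)).
  { unfold level_sum. replace (n - 1)%nat with ((J - 1) + (n - J))%nat by lia.
    rewrite seq_app, rsum_app. replace (2 + (J - 1))%nat with (S J) by lia. reflexivity. }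
  assert (Hgeom : / a - 1 = rsum (seq 2 (J - 1)) (fun l => (1 - a) ^ (l - 1)) + (1 - a) ^ J / a).
  { rewrite rsum_geometric by (lia || lra). field. lra. }
  pose proof (level_head_close J d HJ Hd Hd1 Hd2 Hclose).
  pose proof (level_tail_le J ltac:(lia)).
  assert (0 <= rsum (seq (S J) (n - J)) (fun l => evolve_to mu l n (in_window a n) 1%nat)).
  { apply rsum_nonneg. intros l Hl. apply in_seq in Hl. apply evolve_to_window_nonneg; lra || lia. }
  assert (0 <= (1 - a) ^ J / a) by (apply Rdiv_nonneg; [apply pow_le|]; lra).
  rewrite Hsplit, Hgeom. rewrite Rabs_le_iff in *. split; lra.
Qed.

Lemma window_prob_error J d : (2 <= J < n)%nat -> 0 < d -> d <= a / 2 -> d <= (1 - a) / 2 ->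
  (forall l, (2 <= l <= J)%nat ->
     polya_close d n l (a - d) /\ polya_close d n l (a + d) /\ polya_close d n l (1 - d)) ->
  Rabs (window_prob a n mu - 2 * (/ a - 1) * mu)
  <= mu * (2 * INR J * (INR J + 2) * d + 4 / (a ^ 2 * (INR J + 1)) + 2 * (1 - a) ^ J / a
           + err_scale n mu * (255 / a ^ 2 + 4 * INR J / d + 2 * (/ a - 1))).
Proof.
  intros HJ Hd Hd1 Hd2 Hclose.
  assert (Hc : 0 <= / a - 1) by (assert (1 < / a) by (rewrite <- Rinv_1; apply Rinv_lt_contravar; lra); lra).
  eapply Rle_trans; [apply (combination_error _ mu (level_sum n mu 0) (level_sum n mu 1) (level_sum n mu 2));
    [exact Hmu | apply level_sum_nonneg | apply level_sum_nonneg | exact Hc | apply window_prob_decomp; lia]|].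
  apply Rmult_le_compat_l; [lra|].
  pose proof level_sum_0_le. pose proof mu_level_sum_2_le.
  pose proof (level_sum_1_close J d HJ Hd Hd1 Hd2 Hclose).
  pose proof (err_scale_ge n mu Hn (proj1 Hmu)) as (HK & _).
  set (K := err_scale n mu) in *.
  assert (0 < INR J + 1) by (pose proof (pos_INR J); lra).
  assert (E1 : 2 * (INR J * ((INR J + 2) * d + 2 * K / d)) = 2 * INR J * (INR J + 2) * d + K * (4 * INR J / d))
    by (field; lra).
  assert (E2 : 2 * (/ a ^ 2 * (2 / (INR J + 1) + 52 * K)) = 4 / (a ^ 2 * (INR J + 1)) + K * (104 / a ^ 2))
    by (field; lra).
  assert (E3 : 2 * (/ a ^ 2 * (44 * K)) = K * (88 / a ^ 2)) by (field; lra).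
  assert (E4 : / a ^ 2 * (63 * K) = K * (63 / a ^ 2)) by (field; lra).
  assert (2 * mu * (/ a - 1) <= K * (2 * (/ a - 1))) by nra.
  replace (K * (255 / a ^ 2 + 4 * INR J / d + 2 * (/ a - 1)))
    with (K * (88 / a ^ 2) + K * (104 / a ^ 2) + K * (63 / a ^ 2) + K * (4 * INR J / d) + K * (2 * (/ a - 1)))
    by (field; lra).
  unfold Rdiv at 5. lra.
Qed.

End Bounds.
End WindowProb.

Lemma polya_close_eventually a d J : 0 < a < 1 -> 0 < d -> d <= a / 2 -> d <= (1 - a) / 2 ->
  exists N, forall n, (N <= n)%nat -> forall l, (2 <= l <= J)%nat ->
    polya_close d n l (a - d) /\ polya_close d n l (a + d) /\ polya_close d n l (1 - d).
Proof.
  intros Ha Hd Hd1 Hd2.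
  destruct (eventually_uniform (fun l n => (2 <= l)%nat ->
    polya_close d n l (a - d) /\ polya_close d n l (a + d) /\ polya_close d n l (1 - d)) J) as [N HN].
  - intros l _. destruct (le_lt_dec 2 l) as [Hl|Hl]; [|exists 0%nat; intros; lia].
    destruct (polya_tail_cv (a - d) l ltac:(lra) Hl d Hd) as [N1 HN1].
    destruct (polya_tail_cv (a + d) l ltac:(lra) Hl d Hd) as [N2 HN2].
    destruct (polya_tail_cv (1 - d) l ltac:(lra) Hl d Hd) as [N3 HN3].
    exists (Nat.max N1 (Nat.max N2 N3)). intros n Hn _. unfold polya_close, Rdist in *.
    repeat split; [apply HN1 | apply HN2 | apply HN3]; lia.
  - exists N. intros n Hn l Hl. apply HN; lia.
Qed.

Lemma level_cutoff_exists a eps : 0 < a < 1 -> 0 < eps ->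
  exists J, (2 <= J)%nat /\ 4 / (a ^ 2 * (INR J + 1)) <= eps / 4 /\ 2 * (1 - a) ^ J / a <= eps / 4.
Proof.
  intros Ha Heps. assert (0 < a ^ 2 * eps) by (apply Rmult_lt_0_compat; nra).
  destruct (INR_unbounded (16 / (a ^ 2 * eps))) as [J1 HJ1].
  destruct (pow_lt_1_zero (1 - a) ltac:(rewrite Rabs_right; lra) (eps * a / 8) ltac:(nra)) as [J2 HJ2].
  exists (Nat.max (Nat.max J1 J2) 2). set (J := Nat.max (Nat.max J1 J2) 2).
  assert (INR J1 <= INR J) by (apply le_INR; unfold J; lia).
  specialize (HJ2 J ltac:(unfold J; lia)). rewrite Rabs_right in HJ2 by (apply Rle_ge, pow_le; lra).
  split; [unfold J; lia|]. split.
  - assert (16 <= (INR J + 1) * (a ^ 2 * eps)).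
    { apply Rmult_le_reg_r with (/ (a ^ 2 * eps)); [apply Rinv_0_lt_compat; lra|].
      rewrite Rmult_assoc, Rinv_r by lra. unfold Rdiv in HJ1. lra. }
    apply Rmult_le_reg_r with (a ^ 2 * (INR J + 1)); [pose proof (pos_INR J); nra|].
    unfold Rdiv. rewrite Rmult_assoc, Rinv_l by (pose proof (pos_INR J); nra). nra.
  - apply Rmult_le_reg_r with a; [lra|]. unfold Rdiv. rewrite Rmult_assoc, Rinv_l by lra. nra.
Qed.

Lemma window_prob_rel_error a eps : 0 < a < 1 -> 0 < eps -> exists N0 rho, 0 < rho /\
  forall n mu, (N0 <= n)%nat -> 0 <= mu <= 1 -> err_scale n mu <= rho ->
  Rabs (window_prob a n mu - 2 * (/ a - 1) * mu) <= eps * mu.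
Proof.
  intros Ha Heps. destruct (level_cutoff_exists a eps Ha Heps) as (J & HJ & HJ1 & HJ2).
  assert (HJR : 2 <= INR J) by (apply (le_INR 2); exact HJ).
  set (d := Rmin (Rmin (a / 2) ((1 - a) / 2)) (eps / (8 * INR J * (INR J + 2)))).
  assert (Hd : 0 < d) by (apply Rmin_pos; [apply Rmin_pos | apply Rdiv_lt_0_compat]; nra).
  assert (Hd1 : d <= a / 2) by (unfold d; eapply Rle_trans; apply Rmin_l).
  assert (Hd2 : d <= (1 - a) / 2) by (unfold d; eapply Rle_trans; [apply Rmin_l | apply Rmin_r]).
  assert (Hd3 : 2 * INR J * (INR J + 2) * d <= eps / 4).
  { assert (d <= eps / (8 * INR J * (INR J + 2))) by apply Rmin_r.
    assert (eps / (8 * INR J * (INR J + 2)) * (8 * INR J * (INR J + 2)) = eps) by (field; nra). nra. }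
  destruct (polya_close_eventually a d J Ha Hd Hd1 Hd2) as [Nt HNt].
  set (C := 255 / a ^ 2 + 4 * INR J / d + 2 * (/ a - 1)).
  assert (HC : 0 < C).
  { assert (1 < / a) by (rewrite <- Rinv_1; apply Rinv_lt_contravar; lra).
    assert (0 < 255 / a ^ 2) by (apply Rdiv_lt_0_compat; nra).
    assert (0 < 4 * INR J / d) by (apply Rdiv_lt_0_compat; lra). unfold C. lra. }
  exists (Nat.max Nt (S J)), (eps / (4 * C)). split; [apply Rdiv_lt_0_compat; lra|].
  intros n mu Hn Hmu HK.
  eapply Rle_trans; [apply (window_prob_error a Ha n mu Hmu ltac:(lia) J d); auto; [lia | apply HNt; lia]|].
  rewrite (Rmult_comm eps). apply Rmult_le_compat_l; [lra|]. fold C.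
  assert (err_scale n mu * C <= eps / 4).
  { apply Rmult_le_reg_r with (/ C); [apply Rinv_0_lt_compat; lra|].
    rewrite Rmult_assoc, Rinv_r by lra. unfold Rdiv in *. rewrite Rinv_mult in HK. lra. }
  lra.
Qed.

Lemma err_scale_cv0 (n : nat -> nat) (mu : nat -> R) theta :
  (forall M : nat, exists K : nat, forall k, (K <= k)%nat -> (M <= n k)%nat) ->
  Un_cv mu 0 -> Un_cv (fun k => INR (n k) * mu k) theta ->
  Un_cv (fun k => err_scale (n k) (mu k)) 0.
Proof.
  intros Hn Hmu Hnmu.
  set (q := fun k => harm (n k) ^ 2 / INR (n k)).
  assert (Hq : Un_cv q 0).
  { intros e He. destruct (harm_sq_div_small (e / 2) ltac:(lra)) as [M HM].
    destruct (Hn (Nat.max M 1)) as [K HK]. exists K. intros k Hk. specialize (HK k Hk).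
    assert (0 < INR (n k)) by (apply lt_0_INR; lia).
    assert (0 <= q k) by (apply Rdiv_nonneg; [apply pow2_ge_0 | lra]).
    specialize (HM (n k) ltac:(lia)). fold (q k) in HM.
    unfold Rdist. rewrite Rminus_0_r, Rabs_right; lra. }
  destruct (Hn 1%nat) as [K1 HK1].
  apply Un_cv_eventually with (N0 := K1) (v := fun k =>
    mu k + INR (n k) * mu k * q k + INR (n k) * mu k * (INR (n k) * mu k) * q k).
  - intros k Hk. specialize (HK1 k Hk). assert (0 < INR (n k)) by (apply lt_0_INR; lia).
    unfold err_scale, q. field. lra.
  - replace 0 with (0 + theta * 0 + theta * theta * 0) by ring.
    apply CV_plus; [apply CV_plus|]; [exact Hmu | apply CV_mult; [exact Hnmu | exact Hq]|].
    apply CV_mult; [apply CV_mult; exact Hnmu | exact Hq].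
Qed.

Theorem mainTheorem4
  (a theta eta : R) (n : nat -> nat) (mu : nat -> R) (m : nat -> nat)
  (u : nat -> list Nuc) :
  0 < a < 1 ->
  0 <= theta -> 0 <= eta ->
  (forall k, 0 <= mu k <= 1) ->
  (forall k, (1 <= m k)%nat) ->
  (forall k, length (u k) = m k) ->
  (forall M : nat, exists K : nat, forall k, (K <= k)%nat -> (M <= n k)%nat) ->
  Un_cv mu 0 ->
  Un_cv (fun k => INR (n k) * mu k) theta ->
  Un_cv (fun k => INR (m k) * mu k) eta ->
  Un_cv (fun k => expected_stat a (n k) (mu k) (m k) (u k))
        (2 * eta * (/ a - 1)).
Proof.
  intros Ha Htheta Heta Hmu Hm Hu Hn Hmu0 Hnmu Hmmu.
  apply Un_cv_ext with (un := fun k => INR (m k) * window_prob a (n k) (mu k));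
    [intros k; symmetry; apply expected_stat_eq, Hu|].
  replace (2 * eta * (/ a - 1)) with (2 * (/ a - 1) * eta) by ring.
  apply (Un_cv_rel_error _ _ mu); [intros; apply pos_INR | intros; apply Hmu | exact Hmmu|].
  intros eps Heps. destruct (window_prob_rel_error a eps Ha Heps) as (N0 & rho & Hrho & Hrel).
  destruct (err_scale_cv0 n mu theta Hn Hmu0 Hnmu rho Hrho) as [K1 HK1].
  destruct (Hn N0) as [K2 HK2].
  exists (Nat.max K1 K2). intros k Hk. apply Hrel; [apply HK2; lia | apply Hmu|].
  specialize (HK1 k ltac:(lia)). unfold Rdist in HK1. rewrite Rminus_0_r in HK1.
  pose proof (Rle_abs (err_scale (n k) (mu k))). lra.
Qed.
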